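(* Let $t_1,t_7,t_8,m_1\in\mathbb{R}$ and let $\mathfrak g$ be the real linear span of $E_1=\begin{pmatrix} t_1&0&-\frac{i}{2}(m_1-t_7)(t_1-2t_7)&1\\0&t_7+it_8&0&0\\4i&0&2m_1&0\\0&0&0&0\end{pmatrix}$, $E_2=\begin{pmatrix}0&0&0&i\\0&0&0&0\\0&0&0&0\\0&0&0&0\end{pmatrix}$, $E_3=\begin{pmatrix}0&-(m_1-t_7)&0&0\\0&0&0&1\\0&2i&0&0\\0&0&0&0\end{pmatrix}$, $E_4=\begin{pmatrix}0&i(m_1-t_7)&0&0\\0&0&0&i\\0&2&0&0\\0&0&0&0\end{pmatrix}$, $E_5=\begin{pmatrix}0&0&0&0\\0&0&0&0\\0&0&0&1\\0&0&0&0\end{pmatrix}$. Then every integral variety of type $(1/2,0)$ related to $\mathfrak g$ is affinely equivalent to (an open piece of) one of the hypersurfaces 1) $v=2x_1^2+|z_2|^2$; 2) $v=\exp(x_1)+|z_2|^2$; 3) $v=-\ln(1+x_1)+|z_2|^2$; 4) $v=(1+x_1)\ln(1+x_1)+|z_2|^2$; 5) $v=\pm(1+x_1)^{\alpha}+|z_2|^2$ for some $\alpha\in\mathbb{R}\setminus\{0,1,2\}$.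
   Context: Coordinates in $\mathbb{C}^3$ are $z_1=x_1+iy_1$, $z_2=x_2+iy_2$, $w=u+iv$, $z=(z_1,z_2)$. To a complex $4\times4$ matrix $\begin{pmatrix}a_1&a_2&a_3&p\\ b_1&b_2&b_3&s\\ c_1&c_2&c_3&q\\0&0&0&0\end{pmatrix}$ one associates the holomorphic affine vector field $Z=(a_1z_1+a_2z_2+a_3w+p)\frac{\partial}{\partial z_1}+(b_1z_1+b_2z_2+b_3w+s)\frac{\partial}{\partial z_2}+(c_1z_1+c_2z_2+c_3w+q)\frac{\partial}{\partial w}$. For a real linear span $\mathfrak g$ of such matrices, an integral variety of type $(1/2,0)$ related to $\mathfrak g$ is a real-analytic strictly pseudoconvex real hypersurface $M$ defined near $0\in\mathbb{C}^3$, with $0\in M$, given near $0$ by an equation $v=|z_1|^2+|z_2|^2+\frac12(z_1^2+\bar z_1^2)+\sum_{k+l+2m\ge 3}F_{klm}(z,\bar z)u^m$ (with $F_{klm}$ a polynomial of degree $k$ in $z$ and $l$ in $\bar z$, the right-hand side real), such that for every $Z\in\mathfrak g$ the real vector field $Z+\bar Z$ is tangent to $M$, i.e. $\mathrm{Re}(Z(\Phi))|_M=0$ for a defining function $\Phi$ of $M$. Two hypersurfaces are affinely equivalent if a complex affine transformation of $\mathbb{C}^3$ maps a neighbourhood in one onto an open piece of the other. *)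

From Stdlib Require Import Reals.
From Coquelicot Require Import Coquelicot.
Open Scope R_scope.

Definition pt := (C * C * C)%type.
Definition z1_ (p : pt) : C := fst (fst p).
Definition z2_ (p : pt) : C := snd (fst p).
Definition w_  (p : pt) : C := snd p.
Definition x1_ p := Re (z1_ p).  Definition y1_ p := Im (z1_ p).
Definition x2_ p := Re (z2_ p).  Definition y2_ p := Im (z2_ p).
Definition u_  p := Re (w_ p).   Definition v_  p := Im (w_ p).

(* coefficients c a1 a2 a3 a4 a5 of x1^a1 y1^a2 x2^a3 y2^a4 u^a5 *)
Definition coeffs := nat -> nat -> nat -> nat -> nat -> R.

Definition hom_part (c : coeffs) (N : nat) (x1 y1 x2 y2 u : R) : R :=
  sum_f_R0 (fun a1 =>
  sum_f_R0 (fun a2 =>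
  sum_f_R0 (fun a3 =>
  sum_f_R0 (fun a4 =>
    let a5 := (N - a1 - a2 - a3 - a4)%nat in
    c a1 a2 a3 a4 a5 * x1 ^ a1 * y1 ^ a2 * x2 ^ a3 * y2 ^ a4 * u ^ a5)
  (N - a1 - a2 - a3)%nat) (N - a1 - a2)%nat) (N - a1)%nat) N.

Definition abs_coeffs (c : coeffs) : coeffs :=
  fun a1 a2 a3 a4 a5 => Rabs (c a1 a2 a3 a4 a5).

(* Normal form of type (1/2,0): in the expansion
   F = |z1|^2+|z2|^2+1/2(z1^2+zb1^2) + sum_{k+l+2m>=3} F_klm u^m,
   i.e. in real coordinates the monomials of weighted degree
   a1+a2+a3+a4+2a5 <= 2 are exactly those of 2 x1^2 + x2^2 + y2^2. *)
Definition quad_model_coeff (a1 a2 a3 a4 a5 : nat) : R :=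
  match a1, a2, a3, a4, a5 with
  | 2, 0, 0, 0, 0 => 2%R
  | 0, 0, 2, 0, 0 => 1%R
  | 0, 0, 0, 2, 0 => 1%R
  | _, _, _, _, _ => 0%R
  end%nat.

Definition normal_form_12 (c : coeffs) : Prop :=
  forall a1 a2 a3 a4 a5 : nat, (a1 + a2 + a3 + a4 + 2 * a5 <= 2)%nat ->
    c a1 a2 a3 a4 a5 = quad_model_coeff a1 a2 a3 a4 a5.

Definition in_box (d : R) (p : pt) : Prop :=
  Rabs (x1_ p) < d /\ Rabs (y1_ p) < d /\ Rabs (x2_ p) < d /\
  Rabs (y2_ p) < d /\ Rabs (u_ p) < d /\ Rabs (v_ p) < d.

Definition series_rep (c : coeffs) (d : R) (F : R -> R -> R -> R -> R -> R) : Prop :=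
  ex_series (fun N => hom_part (abs_coeffs c) N d d d d d) /\
  forall x1 y1 x2 y2 u, Rabs x1 < d -> Rabs y1 < d -> Rabs x2 < d ->
    Rabs y2 < d -> Rabs u < d ->
    is_series (fun N => hom_part c N x1 y1 x2 y2 u) (F x1 y1 x2 y2 u).

Definition Mset (F : R -> R -> R -> R -> R -> R) (d : R) (p : pt) : Prop :=
  in_box d p /\ v_ p = F (x1_ p) (y1_ p) (x2_ p) (y2_ p) (u_ p).

(* a complex 4x4 matrix, indices 0..3 *)
Definition cmat := nat -> nat -> C.

(* components f_j (j = 0,1,2 for z1,z2,w) of the vector field Z associated to M *)
Definition vf (M : cmat) (j : nat) (p : pt) : C :=
  Cplus (Cplus (Cmult (M j 0%nat) (z1_ p)) (Cmult (M j 1%nat) (z2_ p)))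
        (Cplus (Cmult (M j 2%nat) (w_ p)) (M j 3%nat)).

Definition Phi (F : R -> R -> R -> R -> R -> R) (p : pt) : R :=
  F (x1_ p) (y1_ p) (x2_ p) (y2_ p) (u_ p) - v_ p.

Definition mkpt (x1 y1 x2 y2 u v : R) : pt := ((x1, y1), (x2, y2), (u, v)).

Definition d_x1 (G : pt -> R) (p : pt) : R :=
  Derive (fun t => G (mkpt t (y1_ p) (x2_ p) (y2_ p) (u_ p) (v_ p))) (x1_ p).
Definition d_y1 (G : pt -> R) (p : pt) : R :=
  Derive (fun t => G (mkpt (x1_ p) t (x2_ p) (y2_ p) (u_ p) (v_ p))) (y1_ p).
Definition d_x2 (G : pt -> R) (p : pt) : R :=
  Derive (fun t => G (mkpt (x1_ p) (y1_ p) t (y2_ p) (u_ p) (v_ p))) (x2_ p).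
Definition d_y2 (G : pt -> R) (p : pt) : R :=
  Derive (fun t => G (mkpt (x1_ p) (y1_ p) (x2_ p) t (u_ p) (v_ p))) (y2_ p).
Definition d_u (G : pt -> R) (p : pt) : R :=
  Derive (fun t => G (mkpt (x1_ p) (y1_ p) (x2_ p) (y2_ p) t (v_ p))) (u_ p).
Definition d_v (G : pt -> R) (p : pt) : R :=
  Derive (fun t => G (mkpt (x1_ p) (y1_ p) (x2_ p) (y2_ p) (u_ p) t)) (v_ p).

(* Wirtinger derivatives d/dz = 1/2 (d/dx - i d/dy) *)
Definition wirt (a b : R) : C := (a / 2, - b / 2).

Definition applyZ (M : cmat) (G : pt -> R) (p : pt) : C :=
  Cplus (Cplus (Cmult (vf M 0 p) (wirt (d_x1 G p) (d_y1 G p)))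
               (Cmult (vf M 1 p) (wirt (d_x2 G p) (d_y2 G p))))
        (Cmult (vf M 2 p) (wirt (d_u G p) (d_v G p))).

Definition E1 (t1 t7 t8 m1 : R) : cmat := fun i j =>
  match i, j with
  | 0%nat, 0%nat => RtoC t1
  | 0%nat, 2%nat => (0, - (1/2) * (m1 - t7) * (t1 - 2 * t7))
  | 0%nat, 3%nat => RtoC 1
  | 1%nat, 1%nat => (t7, t8)
  | 2%nat, 0%nat => (0, 4)
  | 2%nat, 2%nat => RtoC (2 * m1)
  | _, _ => RtoC 0
  end.
Definition E2 : cmat := fun i j =>
  match i, j with
  | 0%nat, 3%nat => (0, 1)
  | _, _ => RtoC 0
  end.
Definition E3 (t7 m1 : R) : cmat := fun i j =>
  match i, j with
  | 0%nat, 1%nat => RtoC (- (m1 - t7))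
  | 1%nat, 3%nat => RtoC 1
  | 2%nat, 1%nat => (0, 2)
  | _, _ => RtoC 0
  end.
Definition E4 (t7 m1 : R) : cmat := fun i j =>
  match i, j with
  | 0%nat, 1%nat => (0, m1 - t7)
  | 1%nat, 3%nat => (0, 1)
  | 2%nat, 1%nat => RtoC 2
  | _, _ => RtoC 0
  end.
Definition E5 : cmat := fun i j =>
  match i, j with
  | 2%nat, 3%nat => RtoC 1
  | _, _ => RtoC 0
  end.

Definition in_g (t1 t7 t8 m1 : R) (M : cmat) : Prop :=
  exists k1 k2 k3 k4 k5 : R, forall i j : nat,
    M i j = Cplus (Cplus (Cplus (Cplus
              (Cmult (RtoC k1) (E1 t1 t7 t8 m1 i j))
              (Cmult (RtoC k2) (E2 i j)))
              (Cmult (RtoC k3) (E3 t7 m1 i j)))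
              (Cmult (RtoC k4) (E4 t7 m1 i j)))
              (Cmult (RtoC k5) (E5 i j)).

Definition integral_variety_12 (g : cmat -> Prop)
    (F : R -> R -> R -> R -> R -> R) (d : R) : Prop :=
  0 < d /\
  (exists c : coeffs, normal_form_12 c /\ series_rep c d F) /\
  (forall M : cmat, g M -> forall p : pt, Mset F d p -> Re (applyZ M (Phi F) p) = 0).

(* complex affine map p |-> A p + b, A a 3x3 complex matrix (indices 0..2) *)
Definition aff (A : cmat) (b : pt) (p : pt) : pt :=
  let row i := Cplus (Cplus (Cmult (A i 0%nat) (z1_ p)) (Cmult (A i 1%nat) (z2_ p)))
                     (Cmult (A i 2%nat) (w_ p)) in
  ((Cplus (row 0%nat) (z1_ b), Cplus (row 1%nat) (z2_ b)), Cplus (row 2%nat) (w_ b)).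

Definition det3 (A : cmat) : C :=
  Cminus (Cplus
    (Cmult (A 0%nat 0%nat) (Cminus (Cmult (A 1%nat 1%nat) (A 2%nat 2%nat)) (Cmult (A 1%nat 2%nat) (A 2%nat 1%nat))))
    (Cmult (A 0%nat 2%nat) (Cminus (Cmult (A 1%nat 0%nat) (A 2%nat 1%nat)) (Cmult (A 1%nat 1%nat) (A 2%nat 0%nat)))))
    (Cmult (A 0%nat 1%nat) (Cminus (Cmult (A 1%nat 0%nat) (A 2%nat 2%nat)) (Cmult (A 1%nat 2%nat) (A 2%nat 0%nat)))).

Definition near (q : pt) (e : R) (p : pt) : Prop :=
  Rabs (x1_ p - x1_ q) < e /\ Rabs (y1_ p - y1_ q) < e /\
  Rabs (x2_ p - x2_ q) < e /\ Rabs (y2_ p - y2_ q) < e /\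
  Rabs (u_ p - u_ q) < e /\ Rabs (v_ p - v_ q) < e.
Definition openC (W : pt -> Prop) : Prop :=
  forall q, W q -> exists e, 0 < e /\ forall p, near q e p -> W p.

Definition affinely_equiv (F : R -> R -> R -> R -> R -> R) (d : R)
    (S : pt -> Prop) : Prop :=
  exists (d' : R) (A : cmat) (b : pt) (W : pt -> Prop),
    0 < d' /\ d' <= d /\ det3 A <> RtoC 0 /\ openC W /\
    forall q, (S q /\ W q) <-> exists p, Mset F d' p /\ q = aff A b p.

Definition model1 (p : pt) : Prop :=
  v_ p = 2 * x1_ p ^ 2 + (x2_ p ^ 2 + y2_ p ^ 2).
Definition model2 (p : pt) : Prop :=
  v_ p = exp (x1_ p) + (x2_ p ^ 2 + y2_ p ^ 2).
Definition model3 (p : pt) : Prop :=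
  0 < 1 + x1_ p /\ v_ p = - ln (1 + x1_ p) + (x2_ p ^ 2 + y2_ p ^ 2).
Definition model4 (p : pt) : Prop :=
  0 < 1 + x1_ p /\ v_ p = (1 + x1_ p) * ln (1 + x1_ p) + (x2_ p ^ 2 + y2_ p ^ 2).
Definition model5 (s alpha : R) (p : pt) : Prop :=
  0 < 1 + x1_ p /\ v_ p = s * Rpower (1 + x1_ p) alpha + (x2_ p ^ 2 + y2_ p ^ 2).

(* Put [k = m1 - t7], [A = t1 + 2 k] and [r = x2^2 + y2^2]. Tangency to [E2] and [E5] makes [F]
   independent of [y1] and [u], tangency to [E3] and [E4] expresses [F_x2] and [F_y2] through [F_x1],
   and tangency to [E1] then determines [F_x1].  Let [f] solve
   [f' = (4 X + 2 t7 f) / (1 + A X)], [f 0 = 0].  The defect [F - r - f (x1 + k/2 F)] satisfies a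
   linear ODE along every coordinate line and vanishes at the origin, so it vanishes identically
   (Gronwall); as [f] is a contraction near [0], [M] is the hypersurface [v = r + f (x1 + k/2 v)].
   A complex affine map sending [z1] to [lam (z1 - i k/2 w)] turns [x1 + k/2 v] into a multiple of
   [x1], and integrating the ODE explicitly in the cases [t7 = A], [A = 0], [t7 = 0], [A = 2 t7] and
   otherwise yields the five models.  The regularity of [F] used along the way (partial
   derivatives, [F = O(|x|)] at [0]) is read off its absolutely convergent power series. *)

From Pilot Require Import Defs.
From Stdlib Require Import Reals Lra Lia Psatz.
From Coquelicot Require Import Coquelicot.
Open Scope R_scope.

Lemma pow_abs_le (x r : R) n : Rabs x <= r -> Rabs (x ^ n) <= r ^ n.
Proof. intros H. rewrite <- RPow_abs. apply pow_incr. split; [apply Rabs_pos|exact H]. Qed.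

Lemma Rabs_mult_le_l a x e : Rabs x <= e -> Rabs (a * x) <= Rabs a * e.
Proof. intros H. rewrite Rabs_mult. apply Rmult_le_compat_l; [apply Rabs_pos|exact H]. Qed.

Lemma Rabs_mult3_le a s b S B : Rabs s <= S -> Rabs b <= B -> Rabs (a * s * b) <= Rabs a * S * B.
Proof.
  intros Hs Hb. rewrite !Rabs_mult.
  apply Rmult_le_compat; [apply Rmult_le_pos; apply Rabs_pos|apply Rabs_pos| |exact Hb].
  apply Rmult_le_compat_l; [apply Rabs_pos|exact Hs].
Qed.

Lemma Rabs_div_le p q B : 0 < q -> Rabs p <= B * q -> Rabs (p / q) <= B.
Proof.
  intros Hq H. rewrite Rabs_div, (Rabs_pos_eq q) by lra.
  apply Rmult_le_reg_r with q; [exact Hq|]. unfold Rdiv. rewrite Rmult_assoc, Rinv_l, Rmult_1_r by lra.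
  exact H.
Qed.

Lemma is_derive_eq (f : R -> R) (x l l' : R) : is_derive f x l -> l = l' -> is_derive f x l'.
Proof. intros H <-; exact H. Qed.

Lemma is_derive_continuity_pt (f : R -> R) x l : is_derive f x l -> continuity_pt f x.
Proof.
  intros H. apply continuity_pt_filterlim.
  exact (@ex_derive_continuous R_AbsRing R_NormedModule f x (ex_intro _ l H)).
Qed.

Lemma Derive_minus_const (f : R -> R) x v : ex_derive f x -> Derive (fun t => f t - v) x = Derive f x.
Proof.
  intros H. rewrite Derive_minus; [|exact H|apply ex_derive_const]. rewrite Derive_const. ring.
Qed.

Lemma C_eq (a b : C) : fst a = fst b -> snd a = snd b -> a = b.
Proof. destruct a, b; simpl; intros; subst; reflexivity. Qed.

(** * Absolutely convergent power series in five variables *)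

Definition deg_sum (N : nat) (g : nat -> nat -> nat -> nat -> nat -> R) : R :=
  sum_f_R0 (fun a1 =>
  sum_f_R0 (fun a2 =>
  sum_f_R0 (fun a3 =>
  sum_f_R0 (fun a4 => g a1 a2 a3 a4 (N - a1 - a2 - a3 - a4)%nat)
  (N - a1 - a2 - a3)%nat) (N - a1 - a2)%nat) (N - a1)%nat) N.

Lemma deg_sum_le N g h : (forall a1 a2 a3 a4 a5, g a1 a2 a3 a4 a5 <= h a1 a2 a3 a4 a5) ->
  deg_sum N g <= deg_sum N h.
Proof. intros H; unfold deg_sum. repeat (apply sum_Rle; intros). apply H. Qed.

Lemma deg_sum_nonneg N g : (forall a1 a2 a3 a4 a5, 0 <= g a1 a2 a3 a4 a5) -> 0 <= deg_sum N g.
Proof. intros H; unfold deg_sum. repeat (apply cond_pos_sum; intros). apply H. Qed.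

Lemma deg_sum_abs N g :
  Rabs (deg_sum N g) <= deg_sum N (fun a1 a2 a3 a4 a5 => Rabs (g a1 a2 a3 a4 a5)).
Proof.
  unfold deg_sum.
  do 4 (eapply Rle_trans; [apply sum_f_R0_triangle|]; apply sum_Rle; intros).
  apply Rle_refl.
Qed.

Lemma deg_sum_minus N g h :
  deg_sum N (fun a1 a2 a3 a4 a5 => g a1 a2 a3 a4 a5 - h a1 a2 a3 a4 a5)
  = deg_sum N g - deg_sum N h.
Proof.
  unfold deg_sum. do 4 (rewrite <- minus_sum; apply sum_eq; intros). reflexivity.
Qed.

Lemma deg_sum_scal N g x :
  deg_sum N (fun a1 a2 a3 a4 a5 => x * g a1 a2 a3 a4 a5) = x * deg_sum N g.
Proof.
  unfold deg_sum. do 4 (rewrite scal_sum; apply sum_eq; intros; rewrite Rmult_comm). reflexivity.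
Qed.

Lemma deg_sum_abs_scal N g x : 0 <= x ->
  x * Rabs (deg_sum N g) <= deg_sum N (fun a1 a2 a3 a4 a5 => x * Rabs (g a1 a2 a3 a4 a5)).
Proof.
  intros Hx. rewrite deg_sum_scal. apply Rmult_le_compat_l; [exact Hx|apply deg_sum_abs].
Qed.

Definition monomial (a1 a2 a3 a4 a5 : nat) (q : nat -> R) : R :=
  q 0%nat ^ a1 * q 1%nat ^ a2 * q 2%nat ^ a3 * q 3%nat ^ a4 * q 4%nat ^ a5.

Definition hom5 (c : coeffs) (N : nat) (q : nat -> R) : R :=
  hom_part c N (q 0%nat) (q 1%nat) (q 2%nat) (q 3%nat) (q 4%nat).

Definition eval5 (F : R -> R -> R -> R -> R -> R) (q : nat -> R) : R :=
  F (q 0%nat) (q 1%nat) (q 2%nat) (q 3%nat) (q 4%nat).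

Definition cst (r : R) : nat -> R := fun _ => r.

Lemma hom5_deg_sum c N q :
  hom5 c N q = deg_sum N (fun a1 a2 a3 a4 a5 => c a1 a2 a3 a4 a5 * monomial a1 a2 a3 a4 a5 q).
Proof. unfold hom5, hom_part, deg_sum, monomial. do 4 (apply sum_eq; intros). ring. Qed.

Lemma hom_part_abs_deg_sum c N r : hom_part (abs_coeffs c) N r r r r r =
  deg_sum N (fun a1 a2 a3 a4 a5 => Rabs (c a1 a2 a3 a4 a5) * monomial a1 a2 a3 a4 a5 (cst r)).
Proof. exact (hom5_deg_sum (abs_coeffs c) N (cst r)). Qed.

Lemma monomial_cst a1 a2 a3 a4 a5 r :
  monomial a1 a2 a3 a4 a5 (cst r) = r ^ (a1 + a2 + a3 + a4 + a5).
Proof. unfold monomial, cst. rewrite !pow_add. ring. Qed.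

Lemma monomial_abs_le a1 a2 a3 a4 a5 q p :
  (forall k, (k < 5)%nat -> Rabs (q k) <= p k) ->
  Rabs (monomial a1 a2 a3 a4 a5 q) <= monomial a1 a2 a3 a4 a5 p.
Proof.
  intros H. unfold monomial. rewrite !Rabs_mult.
  repeat first [apply Rmult_le_compat | apply Rmult_le_pos | apply Rabs_pos
               | apply pow_abs_le, H; lia].
Qed.

Lemma hom_part_abs_nonneg c N r : 0 <= r -> 0 <= hom_part (abs_coeffs c) N r r r r r.
Proof.
  intros Hr. rewrite hom_part_abs_deg_sum. apply deg_sum_nonneg; intros.
  rewrite monomial_cst. apply Rmult_le_pos; [apply Rabs_pos|apply pow_le, Hr].
Qed.

Lemma hom_part_abs_mono c N r s : 0 <= r <= s ->
  hom_part (abs_coeffs c) N r r r r r <= hom_part (abs_coeffs c) N s s s s s.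
Proof.
  intros Hr. rewrite !hom_part_abs_deg_sum. apply deg_sum_le; intros.
  rewrite !monomial_cst. apply Rmult_le_compat_l; [apply Rabs_pos|apply pow_incr, Hr].
Qed.

Lemma is_series_abs_le (a b : nat -> R) la lb : is_series a la -> is_series b lb ->
  (forall n, Rabs (a n) <= b n) -> Rabs la <= lb.
Proof.
  intros A B H.
  assert (EA : ex_series (fun n => Rabs (a n))).
  { apply (@ex_series_le R_AbsRing R_CompleteNormedModule _ b); [|eexists; eauto].
    intros n. unfold norm; simpl. unfold abs; simpl. rewrite Rabs_Rabsolu. auto. }
  rewrite <- (is_series_unique _ _ A), <- (is_series_unique _ _ B).
  eapply Rle_trans; [apply Series_Rabs; auto|]. apply Series_le; [|eexists; eauto].
  intros n; split; [apply Rabs_pos|auto].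
Qed.
Definition pow_rem (e : nat) (s t : R) : R := (s + t) ^ e - s ^ e - INR e * t * s ^ pred e.

Lemma pow_rem_S e s t :
  pow_rem (S e) s t = (s + t) * pow_rem e s t + INR e * t ^ 2 * s ^ pred e.
Proof.
  unfold pow_rem. rewrite S_INR. cbn [pred pow].
  assert (E : t * (INR e * (s * s ^ pred e)) = t * (INR e * s ^ e))
    by (destruct e; simpl; ring).
  lra.
Qed.

Lemma pow_rem_nonneg e s t : 0 <= s -> 0 <= t -> 0 <= pow_rem e s t.
Proof.
  intros Hs Ht. induction e as [|e IH]; [unfold pow_rem; simpl; lra|].
  rewrite pow_rem_S. assert (0 <= s ^ pred e) by (apply pow_le; lra).
  assert (0 <= INR e) by apply pos_INR. apply Rplus_le_le_0_compat; [nra|].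
  apply Rmult_le_pos; [apply Rmult_le_pos; [lra|apply pow2_ge_0]|lra].
Qed.

Lemma pow_rem_abs_le e s t : Rabs (pow_rem e s t) <= pow_rem e (Rabs s) (Rabs t).
Proof.
  induction e as [|e IH]; [unfold pow_rem; simpl; rewrite !Rmult_0_l; split_Rabs; lra|].
  rewrite !pow_rem_S. eapply Rle_trans; [apply Rabs_triang|]. apply Rplus_le_compat.
  - rewrite Rabs_mult. apply Rmult_le_compat; try apply Rabs_pos; [apply Rabs_triang|exact IH].
  - rewrite !Rabs_mult, <- !RPow_abs, (Rabs_pos_eq (INR e)) by apply pos_INR. apply Rle_refl.
Qed.

Lemma pow_rem_scale e s h D : 0 <= s -> 0 <= h <= D ->
  D ^ 2 * pow_rem e s h <= h ^ 2 * pow_rem e s D.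
Proof.
  intros Hs Hh. induction e as [|e IH]; [unfold pow_rem; simpl; lra|].
  rewrite !pow_rem_S.
  assert (0 <= pow_rem e s h) by (apply pow_rem_nonneg; lra).
  assert (0 <= INR e * s ^ pred e) by (apply Rmult_le_pos; [apply pos_INR|apply pow_le; lra]).
  assert (D ^ 2 * ((s + h) * pow_rem e s h) <= (s + D) * (h ^ 2 * pow_rem e s D)).
  { apply Rle_trans with ((s + D) * (D ^ 2 * pow_rem e s h)); [|apply Rmult_le_compat_l; lra].
    assert (0 <= D ^ 2 * pow_rem e s h) by (apply Rmult_le_pos; [apply pow2_ge_0|lra]). nra. }
  nra.
Qed.

Lemma pow_taylor_bound e s t D : Rabs t <= D ->
  D ^ 2 * Rabs (pow_rem e s t) <= t ^ 2 * (Rabs s + D) ^ e.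
Proof.
  intros Ht. assert (D0 : 0 <= D) by (eapply Rle_trans; [apply Rabs_pos|exact Ht]).
  rewrite <- (pow2_abs t).
  apply Rle_trans with (D ^ 2 * pow_rem e (Rabs s) (Rabs t)).
  { apply Rmult_le_compat_l; [apply pow2_ge_0|apply pow_rem_abs_le]. }
  eapply Rle_trans; [apply pow_rem_scale; [apply Rabs_pos|split; [apply Rabs_pos|exact Ht]]|].
  apply Rmult_le_compat_l; [apply pow2_ge_0|].
  assert (0 <= Rabs s ^ e) by (apply pow_le, Rabs_pos).
  assert (0 <= INR e * D * Rabs s ^ pred e).
  { apply Rmult_le_pos; [apply Rmult_le_pos; [apply pos_INR|lra]|apply pow_le, Rabs_pos]. }
  unfold pow_rem. lra.
Qed.

Lemma pow_deriv_bound e s D : 0 <= D -> D * Rabs (INR e * s ^ pred e) <= (Rabs s + D) ^ e.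
Proof.
  intros HD. assert (H := pow_rem_nonneg e (Rabs s) D (Rabs_pos s) HD).
  assert (0 <= Rabs s ^ e) by (apply pow_le, Rabs_pos).
  rewrite Rabs_mult, <- RPow_abs, (Rabs_pos_eq (INR e)) by apply pos_INR.
  unfold pow_rem in H. lra.
Qed.

Definition upd (q : nat -> R) (j : nat) (s : R) : nat -> R :=
  fun k => if Nat.eqb k j then s else q k.

Lemma upd_same q j k : upd q j (q j) k = q k.
Proof. unfold upd. destruct (Nat.eqb_spec k j); subst; reflexivity. Qed.

Definition expo (j a1 a2 a3 a4 a5 : nat) : nat :=
  match j with 0 => a1 | 1 => a2 | 2 => a3 | 3 => a4 | _ => a5 end%nat.

Lemma monomial_upd j a1 a2 a3 a4 a5 q s : (j < 5)%nat ->
  monomial a1 a2 a3 a4 a5 (upd q j s)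
  = s ^ expo j a1 a2 a3 a4 a5 * monomial a1 a2 a3 a4 a5 (upd q j 1).
Proof.
  intros Hj. unfold monomial, upd.
  destruct j as [|[|[|[|[|j]]]]]; simpl; rewrite ?pow1; try ring; lia.
Qed.

Lemma monomial_upd_same a1 a2 a3 a4 a5 q j :
  monomial a1 a2 a3 a4 a5 (upd q j (q j)) = monomial a1 a2 a3 a4 a5 q.
Proof. unfold monomial. rewrite !upd_same. reflexivity. Qed.

Definition dmonomial (j a1 a2 a3 a4 a5 : nat) (q : nat -> R) : R :=
  INR (expo j a1 a2 a3 a4 a5) * q j ^ pred (expo j a1 a2 a3 a4 a5)
  * monomial a1 a2 a3 a4 a5 (upd q j 1).

Section MonomialAlongCoordinate.
Variables (j a1 a2 a3 a4 a5 : nat) (q : nat -> R) (D r : R).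
Hypothesis Hj : (j < 5)%nat.
Hypothesis HD : 0 <= D.
Hypothesis Hqr : forall k, (k < 5)%nat -> Rabs (q k) + D <= r.

Let e := expo j a1 a2 a3 a4 a5.

Lemma monomial_cst_split :
  monomial a1 a2 a3 a4 a5 (cst r) = r ^ e * monomial a1 a2 a3 a4 a5 (upd (cst r) j 1).
Proof. rewrite <- (monomial_upd_same _ _ _ _ _ (cst r) j), monomial_upd by exact Hj. reflexivity. Qed.

Lemma monomial_cofactor_bound :
  Rabs (monomial a1 a2 a3 a4 a5 (upd q j 1)) <= monomial a1 a2 a3 a4 a5 (upd (cst r) j 1).
Proof.
  apply monomial_abs_le. intros k Hk. unfold upd, cst.
  destruct (Nat.eqb k j); [rewrite Rabs_R1; lra|]. specialize (Hqr k Hk). lra.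
Qed.

Lemma pow_coord_le : (Rabs (q j) + D) ^ e <= r ^ e.
Proof.
  apply pow_incr. split; [apply Rplus_le_le_0_compat; [apply Rabs_pos|exact HD]|exact (Hqr j Hj)].
Qed.

Lemma cofactor_nonneg : 0 <= monomial a1 a2 a3 a4 a5 (upd (cst r) j 1).
Proof. eapply Rle_trans; [apply Rabs_pos|apply monomial_cofactor_bound]. Qed.

Lemma monomial_taylor_bound t : Rabs t <= D ->
  D ^ 2 * Rabs (monomial a1 a2 a3 a4 a5 (upd q j (q j + t)) - monomial a1 a2 a3 a4 a5 q
                - t * dmonomial j a1 a2 a3 a4 a5 q)
  <= t ^ 2 * monomial a1 a2 a3 a4 a5 (cst r).
Proof.
  intros Ht.
  rewrite <- (monomial_upd_same _ _ _ _ _ q j).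
  rewrite monomial_cst_split, (monomial_upd j _ _ _ _ _ q (q j + t)),
    (monomial_upd j _ _ _ _ _ q (q j)) by exact Hj. unfold dmonomial. fold e.
  replace ((q j + t) ^ e * monomial a1 a2 a3 a4 a5 (upd q j 1)
           - q j ^ e * monomial a1 a2 a3 a4 a5 (upd q j 1)
           - t * (INR e * q j ^ pred e * monomial a1 a2 a3 a4 a5 (upd q j 1)))
    with (pow_rem e (q j) t * monomial a1 a2 a3 a4 a5 (upd q j 1)) by (unfold pow_rem; ring).
  rewrite Rabs_mult, <- Rmult_assoc.
  assert (T := pow_taylor_bound e (q j) t D Ht). assert (P := pow_coord_le).
  assert (C := cofactor_nonneg). assert (B := monomial_cofactor_bound).
  assert (0 <= D ^ 2 * Rabs (pow_rem e (q j) t)) by (apply Rmult_le_pos; [apply pow2_ge_0|apply Rabs_pos]).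
  assert (0 <= t ^ 2) by apply pow2_ge_0.
  apply Rle_trans with (t ^ 2 * (Rabs (q j) + D) ^ e * monomial a1 a2 a3 a4 a5 (upd (cst r) j 1)).
  - apply Rmult_le_compat; auto; apply Rabs_pos.
  - rewrite Rmult_assoc. apply Rmult_le_compat_l; [lra|]. apply Rmult_le_compat_r; lra.
Qed.

Lemma dmonomial_bound :
  D * Rabs (dmonomial j a1 a2 a3 a4 a5 q) <= monomial a1 a2 a3 a4 a5 (cst r).
Proof.
  unfold dmonomial. fold e. rewrite monomial_cst_split, Rabs_mult, <- Rmult_assoc.
  assert (T := pow_deriv_bound e (q j) D HD). assert (P := pow_coord_le).
  apply Rmult_le_compat; [apply Rmult_le_pos; [lra|apply Rabs_pos]|apply Rabs_pos|lra|].
  apply monomial_cofactor_bound.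
Qed.

End MonomialAlongCoordinate.

Definition dhom5 (c : coeffs) (j N : nat) (q : nat -> R) : R :=
  deg_sum N (fun a1 a2 a3 a4 a5 => c a1 a2 a3 a4 a5 * dmonomial j a1 a2 a3 a4 a5 q).

Lemma hom5_taylor_bound c j q D r t N : (j < 5)%nat -> 0 <= D ->
  (forall k, (k < 5)%nat -> Rabs (q k) + D <= r) -> Rabs t <= D ->
  D ^ 2 * Rabs (hom5 c N (upd q j (q j + t)) - hom5 c N q - t * dhom5 c j N q)
  <= t ^ 2 * hom_part (abs_coeffs c) N r r r r r.
Proof.
  intros Hj HD Hqr Ht. unfold dhom5. rewrite !hom5_deg_sum, hom_part_abs_deg_sum.
  rewrite <- deg_sum_scal, <- !deg_sum_minus, <- deg_sum_scal.
  eapply Rle_trans; [apply deg_sum_abs_scal, pow2_ge_0|]. apply deg_sum_le; intros.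
  replace (c a1 a2 a3 a4 a5 * monomial a1 a2 a3 a4 a5 (upd q j (q j + t))
           - c a1 a2 a3 a4 a5 * monomial a1 a2 a3 a4 a5 q
           - t * (c a1 a2 a3 a4 a5 * dmonomial j a1 a2 a3 a4 a5 q))
    with (c a1 a2 a3 a4 a5 * (monomial a1 a2 a3 a4 a5 (upd q j (q j + t))
           - monomial a1 a2 a3 a4 a5 q - t * dmonomial j a1 a2 a3 a4 a5 q)) by ring.
  rewrite Rabs_mult.
  assert (B := monomial_taylor_bound j a1 a2 a3 a4 a5 q D r Hj HD Hqr t Ht).
  assert (0 <= Rabs (c a1 a2 a3 a4 a5)) by apply Rabs_pos. nra.
Qed.

Lemma hom5_deriv_bound c j q D r N : (j < 5)%nat -> 0 <= D ->
  (forall k, (k < 5)%nat -> Rabs (q k) + D <= r) ->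
  D * Rabs (dhom5 c j N q) <= hom_part (abs_coeffs c) N r r r r r.
Proof.
  intros Hj HD Hqr. unfold dhom5. rewrite hom_part_abs_deg_sum.
  eapply Rle_trans; [apply deg_sum_abs_scal, HD|]. apply deg_sum_le; intros.
  rewrite Rabs_mult.
  assert (B := dmonomial_bound j a1 a2 a3 a4 a5 q D r Hj HD Hqr).
  assert (0 <= Rabs (c a1 a2 a3 a4 a5)) by apply Rabs_pos. nra.
Qed.

Lemma is_derive_of_quadratic_bound (g : R -> R) x l D K : 0 < D ->
  (forall t, Rabs t <= D -> Rabs (g (x + t) - g x - t * l) <= K * t ^ 2) -> is_derive g x l.
Proof.
  intros HD H. apply is_derive_Reals. intros eps Heps.
  assert (HK : 0 < Rabs K + 1) by (assert (X := Rabs_pos K); lra).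
  assert (Hdel : 0 < Rmin D (eps / (Rabs K + 1))) by (apply Rmin_pos; [lra|apply Rdiv_lt_0_compat; lra]).
  exists (mkposreal _ Hdel). intros h Hh0 Hh. simpl in Hh.
  assert (HhD : Rabs h <= D) by (left; eapply Rlt_le_trans; [exact Hh|apply Rmin_l]).
  assert (Hhe : Rabs h * (Rabs K + 1) < eps).
  { apply Rlt_le_trans with (Rmin D (eps / (Rabs K + 1)) * (Rabs K + 1)).
    - apply Rmult_lt_compat_r; lra.
    - apply Rle_trans with (eps / (Rabs K + 1) * (Rabs K + 1));
        [apply Rmult_le_compat_r; [lra|apply Rmin_r]|].
      right; field; lra. }
  assert (Hh' : 0 < Rabs h) by (apply Rabs_pos_lt, Hh0).
  replace ((g (x + h) - g x) / h - l) with ((g (x + h) - g x - h * l) / h) by (field; exact Hh0).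
  rewrite Rabs_div by exact Hh0.
  apply Rmult_lt_reg_r with (Rabs h); [exact Hh'|]. unfold Rdiv.
  rewrite Rmult_assoc, Rinv_l, Rmult_1_r by lra.
  eapply Rle_lt_trans; [apply H, HhD|].
  rewrite <- (pow2_abs h). assert (Rabs K * Rabs h <= eps) by nra.
  apply Rle_lt_trans with (Rabs K * Rabs h ^ 2); [apply Rmult_le_compat_r; [apply pow2_ge_0|apply Rle_abs]|].
  simpl. nra.
Qed.

Lemma series_rep_is_series c d F q : series_rep c d F ->
  (forall k, (k < 5)%nat -> Rabs (q k) < d) -> is_series (fun N => hom5 c N q) (eval5 F q).
Proof. intros [_ H] Hq. apply H; apply Hq; lia. Qed.

Definition abs_sum (c : coeffs) (d : R) : R := Series (fun N => hom_part (abs_coeffs c) N d d d d d).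

Lemma abs_sum_correct c d F : series_rep c d F ->
  is_series (fun N => hom_part (abs_coeffs c) N d d d d d) (abs_sum c d).
Proof. intros [H _]. apply Series_correct, H. Qed.

Section SeriesAlongCoordinate.
Variables (c : coeffs) (d : R) (F : R -> R -> R -> R -> R -> R) (q : nat -> R) (j : nat) (r D : R).
Hypothesis Hs : series_rep c d F.
Hypothesis HD : 0 < D.
Hypothesis Hr : 0 <= r /\ r + D < d.
Hypothesis Hq : forall k, (k < 5)%nat -> Rabs (q k) <= r.
Hypothesis Hj : (j < 5)%nat.

Lemma coord_margin : forall k, (k < 5)%nat -> Rabs (q k) + D <= r + D.
Proof. intros k Hk. specialize (Hq k Hk). lra. Qed.

Lemma dhom5_ex_series : ex_series (fun N => dhom5 c j N q).
Proof.
  apply (@ex_series_le R_AbsRing R_CompleteNormedModule _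
           (fun N => / D * hom_part (abs_coeffs c) N d d d d d));
    [|eexists; exact (is_series_scal (/ D) _ _ (abs_sum_correct c d F Hs))].
  intros N. unfold norm; simpl; unfold abs; simpl.
  apply Rmult_le_reg_l with D; [exact HD|]. rewrite <- Rmult_assoc, Rinv_r, Rmult_1_l by lra.
  eapply Rle_trans; [apply (hom5_deriv_bound c j q D (r + D) N Hj); [lra|exact coord_margin]|].
  apply hom_part_abs_mono; lra.
Qed.

Lemma series_rep_taylor_bound t : Rabs t <= D ->
  D ^ 2 * Rabs (eval5 F (upd q j (q j + t)) - eval5 F q - t * Series (fun N => dhom5 c j N q))
  <= t ^ 2 * abs_sum c d.
Proof.
  intros Ht. rewrite <- (Rabs_pos_eq (D ^ 2)) at 1 by (apply pow2_ge_0). rewrite <- Rabs_mult.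
  assert (Hq' : forall s, Rabs s <= r + D -> forall k, (k < 5)%nat -> Rabs (upd q j s k) < d).
  { intros s Hs' k Hk. unfold upd. destruct (Nat.eqb k j); [lra|specialize (Hq k Hk); lra]. }
  assert (H1 : is_series (fun N => hom5 c N (upd q j (q j + t))) (eval5 F (upd q j (q j + t)))).
  { apply (series_rep_is_series c d F _ Hs), Hq'.
    eapply Rle_trans; [apply Rabs_triang|]. specialize (Hq j Hj). lra. }
  assert (H0 : is_series (fun N => hom5 c N q) (eval5 F q)).
  { apply (series_rep_is_series c d F _ Hs). intros k Hk. specialize (Hq k Hk). lra. }
  apply (is_series_abs_le
    (fun N => D ^ 2 * (hom5 c N (upd q j (q j + t)) - hom5 c N q - t * dhom5 c j N q))
    (fun N => t ^ 2 * hom_part (abs_coeffs c) N d d d d d)).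
  - exact (is_series_scal (D ^ 2) _ _ (is_series_minus _ _ _ _ (is_series_minus _ _ _ _ H1 H0)
      (is_series_scal t _ _ (Series_correct _ dhom5_ex_series)))).
  - exact (is_series_scal (t ^ 2) _ _ (abs_sum_correct c d F Hs)).
  - intros N. rewrite Rabs_mult, (Rabs_pos_eq (D ^ 2)) by apply pow2_ge_0.
    eapply Rle_trans; [apply (hom5_taylor_bound c j q D (r + D) t N Hj); [lra|exact coord_margin|exact Ht]|].
    apply Rmult_le_compat_l; [apply pow2_ge_0|apply hom_part_abs_mono; lra].
Qed.

End SeriesAlongCoordinate.

Lemma series_rep_ex_derive c d F q j r : series_rep c d F -> 0 <= r < d ->
  (forall k, (k < 5)%nat -> Rabs (q k) <= r) -> (j < 5)%nat ->
  ex_derive (fun s => eval5 F (upd q j s)) (q j).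
Proof.
  intros Hs Hr Hq Hj. set (D := (d - r) / 2).
  assert (HD : 0 < D) by (unfold D; lra). assert (HrD : 0 <= r /\ r + D < d) by (unfold D; lra).
  exists (Series (fun N => dhom5 c j N q)).
  apply (is_derive_of_quadratic_bound _ _ _ D (abs_sum c d / D ^ 2) HD). intros t Ht.
  assert (HD2 : 0 < D ^ 2) by (apply pow_lt, HD).
  apply Rmult_le_reg_l with (D ^ 2); [exact HD2|].
  replace (D ^ 2 * (abs_sum c d / D ^ 2 * t ^ 2)) with (t ^ 2 * abs_sum c d) by (field; lra).
  assert (E : eval5 F (upd q j (q j)) = eval5 F q) by (unfold eval5; rewrite !upd_same; reflexivity).
  rewrite E. exact (series_rep_taylor_bound c d F q j r D Hs HD HrD Hq Hj t Ht).
Qed.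

Lemma pow_le_ratio r d n : 0 <= r <= d -> 0 < d -> (1 <= n)%nat -> r ^ n <= r / d * d ^ n.
Proof.
  intros Hr Hd Hn. destruct n as [|n]; [lia|]. simpl.
  replace (r / d * (d * d ^ n)) with (r * d ^ n) by (field; lra).
  apply Rmult_le_compat_l; [lra|]. apply pow_incr; lra.
Qed.

Lemma series_rep_abs_le c d F q r : c 0%nat 0%nat 0%nat 0%nat 0%nat = 0 -> series_rep c d F ->
  0 <= r < d -> (forall k, (k < 5)%nat -> Rabs (q k) <= r) ->
  Rabs (eval5 F q) <= r / d * abs_sum c d.
Proof.
  intros H0 Hs Hr Hq.
  apply (is_series_abs_le (fun N => hom5 c N q) (fun N => r / d * hom_part (abs_coeffs c) N d d d d d)).
  - apply (series_rep_is_series c d F q Hs). intros k Hk. specialize (Hq k Hk). lra.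
  - exact (is_series_scal (r / d) _ _ (abs_sum_correct c d F Hs)).
  - intros N. rewrite hom5_deg_sum, hom_part_abs_deg_sum, <- deg_sum_scal.
    eapply Rle_trans; [apply deg_sum_abs|]. apply deg_sum_le; intros.
    rewrite Rabs_mult, monomial_cst.
    assert (M := monomial_abs_le a1 a2 a3 a4 a5 q (cst r) Hq). rewrite monomial_cst in M.
    assert (C := Rabs_pos (c a1 a2 a3 a4 a5)).
    destruct (Nat.eq_dec (a1 + a2 + a3 + a4 + a5) 0) as [E|E].
    + assert (a1 = 0 /\ a2 = 0 /\ a3 = 0 /\ a4 = 0 /\ a5 = 0)%nat as (-> & -> & -> & -> & ->) by lia.
      rewrite H0, Rabs_R0. lra.
    + assert (P := pow_le_ratio r d (a1 + a2 + a3 + a4 + a5) ltac:(lra) ltac:(lra) ltac:(lia)).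
      assert (0 <= Rabs (monomial a1 a2 a3 a4 a5 q)) by apply Rabs_pos. nra.
Qed.

Lemma abs_sum_nonneg c d F : series_rep c d F -> 0 <= d -> 0 <= abs_sum c d.
Proof.
  intros Hs Hd. assert (HS := abs_sum_correct c d F Hs).
  assert (X : Rabs (abs_sum c d) <= abs_sum c d).
  { apply (is_series_abs_le _ _ _ _ HS HS). intros N.
    rewrite Rabs_pos_eq; [lra|apply hom_part_abs_nonneg, Hd]. }
  assert (Y := Rabs_pos (abs_sum c d)). lra.
Qed.

Lemma normal_form_12_const c : normal_form_12 c -> c 0%nat 0%nat 0%nat 0%nat 0%nat = 0.
Proof. intros H. apply H. simpl. lia. Qed.

Lemma series_rep_zero c d F : normal_form_12 c -> series_rep c d F -> 0 < d -> F 0 0 0 0 0 = 0.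
Proof.
  intros Hn Hs Hd.
  assert (H := series_rep_abs_le c d F (cst 0) 0 (normal_form_12_const c Hn) Hs ltac:(lra)).
  assert (B : Rabs (eval5 F (cst 0)) <= 0).
  { eapply Rle_trans; [apply H|]; [intros k _; unfold cst; rewrite Rabs_R0; lra|].
    unfold Rdiv. rewrite Rmult_0_l, Rmult_0_l. lra. }
  assert (Z := Rabs_pos (eval5 F (cst 0))). unfold eval5, cst in *.
  destruct (Req_dec (F 0 0 0 0 0) 0) as [E|E]; [exact E|].
  assert (P := Rabs_pos_lt _ E). lra.
Qed.

Lemma series_rep_small c d F : normal_form_12 c -> series_rep c d F -> 0 < d ->
  forall eps, 0 < eps -> exists rho, 0 < rho < d /\
    forall q, (forall k, (k < 5)%nat -> Rabs (q k) <= rho) -> Rabs (eval5 F q) <= eps.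
Proof.
  intros Hn Hs Hd eps He.
  set (S := abs_sum c d). assert (S0 : 0 <= S) by (apply (abs_sum_nonneg c d F Hs); lra).
  set (rho := Rmin (d / 2) (eps * d / (S + 1))).
  assert (Hr : 0 < rho) by (apply Rmin_pos; [lra|apply Rdiv_lt_0_compat; nra]).
  assert (Hrd : rho <= d / 2) by apply Rmin_l.
  assert (Hre : rho * (S + 1) <= eps * d).
  { apply Rle_trans with (eps * d / (S + 1) * (S + 1)); [apply Rmult_le_compat_r; [lra|apply Rmin_r]|].
    right. field. lra. }
  exists rho. split; [lra|]. intros q Hq.
  eapply Rle_trans; [apply (series_rep_abs_le c d F q rho (normal_form_12_const c Hn) Hs); [lra|exact Hq]|].
  fold S. apply Rmult_le_reg_r with d; [lra|].
  replace (rho / d * S * d) with (rho * S) by (field; lra). nra.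
Qed.

Definition vec5 (x1 y1 x2 y2 u : R) : nat -> R :=
  fun k => match k with 0 => x1 | 1 => y1 | 2 => x2 | 3 => y2 | _ => u end%nat.

Definition cbox (r x1 y1 x2 y2 u : R) : Prop :=
  Rabs x1 <= r /\ Rabs y1 <= r /\ Rabs x2 <= r /\ Rabs y2 <= r /\ Rabs u <= r.

Lemma cbox_vec5 r x1 y1 x2 y2 u : cbox r x1 y1 x2 y2 u ->
  forall k, (k < 5)%nat -> Rabs (vec5 x1 y1 x2 y2 u k) <= r.
Proof. intros (B1 & B2 & B3 & B4 & B5) k Hk. destruct k as [|[|[|[|[|k]]]]]; simpl; auto; lia. Qed.

Lemma series_rep_ex_derive5 c d F r x1 y1 x2 y2 u : series_rep c d F -> 0 <= r < d ->
  cbox r x1 y1 x2 y2 u ->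
  ex_derive (fun t => F t y1 x2 y2 u) x1 /\ ex_derive (fun t => F x1 t x2 y2 u) y1 /\
  ex_derive (fun t => F x1 y1 t y2 u) x2 /\ ex_derive (fun t => F x1 y1 x2 t u) y2 /\
  ex_derive (fun t => F x1 y1 x2 y2 t) u.
Proof.
  intros Hs Hr Hb. assert (H := cbox_vec5 _ _ _ _ _ _ Hb).
  repeat split;
    [exact (series_rep_ex_derive c d F (vec5 x1 y1 x2 y2 u) 0 r Hs Hr H ltac:(lia))
    |exact (series_rep_ex_derive c d F (vec5 x1 y1 x2 y2 u) 1 r Hs Hr H ltac:(lia))
    |exact (series_rep_ex_derive c d F (vec5 x1 y1 x2 y2 u) 2 r Hs Hr H ltac:(lia))
    |exact (series_rep_ex_derive c d F (vec5 x1 y1 x2 y2 u) 3 r Hs Hr H ltac:(lia))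
    |exact (series_rep_ex_derive c d F (vec5 x1 y1 x2 y2 u) 4 r Hs Hr H ltac:(lia))].
Qed.

(** * Tangency equations *)

Definition pd_x1 (F : R -> R -> R -> R -> R -> R) (x1 y1 x2 y2 u : R) := Derive (fun t => F t y1 x2 y2 u) x1.
Definition pd_y1 (F : R -> R -> R -> R -> R -> R) (x1 y1 x2 y2 u : R) := Derive (fun t => F x1 t x2 y2 u) y1.
Definition pd_x2 (F : R -> R -> R -> R -> R -> R) (x1 y1 x2 y2 u : R) := Derive (fun t => F x1 y1 t y2 u) x2.
Definition pd_y2 (F : R -> R -> R -> R -> R -> R) (x1 y1 x2 y2 u : R) := Derive (fun t => F x1 y1 x2 t u) y2.
Definition pd_u (F : R -> R -> R -> R -> R -> R) (x1 y1 x2 y2 u : R) := Derive (fun t => F x1 y1 x2 y2 t) u.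

Lemma Re_applyZ_graph M F x1 y1 x2 y2 u v :
  ex_derive (fun t => F t y1 x2 y2 u) x1 -> ex_derive (fun t => F x1 t x2 y2 u) y1 ->
  ex_derive (fun t => F x1 y1 t y2 u) x2 -> ex_derive (fun t => F x1 y1 x2 t u) y2 ->
  ex_derive (fun t => F x1 y1 x2 y2 t) u ->
  let p := mkpt x1 y1 x2 y2 u v in
  2 * Re (applyZ M (Phi F) p) =
  Re (vf M 0 p) * pd_x1 F x1 y1 x2 y2 u + Im (vf M 0 p) * pd_y1 F x1 y1 x2 y2 u +
  Re (vf M 1 p) * pd_x2 F x1 y1 x2 y2 u + Im (vf M 1 p) * pd_y2 F x1 y1 x2 y2 u +
  Re (vf M 2 p) * pd_u F x1 y1 x2 y2 u - Im (vf M 2 p).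
Proof.
  intros H1 H2 H3 H4 H5 p.
  assert (Ev : d_v (Phi F) p = -1).
  { unfold d_v, Phi; cbn. rewrite Derive_minus, Derive_const, Derive_id;
      [ring|apply ex_derive_const|apply ex_derive_id]. }
  unfold applyZ, wirt, Re, Im. cbn [fst snd Cplus Cmult]. rewrite Ev.
  unfold d_x1, d_y1, d_x2, d_y2, d_u, Phi, pd_x1, pd_y1, pd_x2, pd_y2, pd_u; cbn.
  rewrite !Derive_minus_const by assumption.
  change (Derive (F x1 y1 x2 y2) u) with (Derive (fun t => F x1 y1 x2 y2 t) u). field.
Qed.

(* [Defs.E1] is qualified because Stdlib's [Reals] also exports an [E1]. *)
Lemma in_g_of_coords t1 t7 t8 m1 (M : cmat) k1 k2 k3 k4 k5 :
  (forall i j, M i j = Cplus (Cplus (Cplus (Cplus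
              (Cmult (RtoC k1) (Defs.E1 t1 t7 t8 m1 i j))
              (Cmult (RtoC k2) (E2 i j)))
              (Cmult (RtoC k3) (E3 t7 m1 i j)))
              (Cmult (RtoC k4) (E4 t7 m1 i j)))
              (Cmult (RtoC k5) (E5 i j))) -> in_g t1 t7 t8 m1 M.
Proof. intros H. exists k1, k2, k3, k4, k5. exact H. Qed.

Ltac in_g_by k1 k2 k3 k4 k5 :=
  apply (in_g_of_coords _ _ _ _ _ k1 k2 k3 k4 k5); intros i j;
  apply C_eq; unfold Cplus, Cmult, RtoC; simpl; ring.

Lemma in_g_E1 t1 t7 t8 m1 : in_g t1 t7 t8 m1 (Defs.E1 t1 t7 t8 m1).
Proof. in_g_by 1 0 0 0 0. Qed.
Lemma in_g_E2 t1 t7 t8 m1 : in_g t1 t7 t8 m1 E2.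
Proof. in_g_by 0 1 0 0 0. Qed.
Lemma in_g_E3 t1 t7 t8 m1 : in_g t1 t7 t8 m1 (E3 t7 m1).
Proof. in_g_by 0 0 1 0 0. Qed.
Lemma in_g_E4 t1 t7 t8 m1 : in_g t1 t7 t8 m1 (E4 t7 m1).
Proof. in_g_by 0 0 0 1 0. Qed.
Lemma in_g_E5 t1 t7 t8 m1 : in_g t1 t7 t8 m1 E5.
Proof. in_g_by 0 0 0 0 1. Qed.

(* [E1] reads [dx1_den * F_x1 = dx1_num] once [E2]-[E5] have eliminated the other partials. *)
Definition dx1_den (t1 t7 m1 x1 r v : R) : R :=
  t1 * x1 + (1/2) * (m1 - t7) * (t1 - 2 * t7) * v + 1 + t7 * (m1 - t7) * r.
Definition dx1_num (t7 m1 x1 r v : R) : R := 4 * x1 + 2 * m1 * v - 2 * t7 * r.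

Lemma tangency_eqs t1 t7 t8 m1 F d x1 y1 x2 y2 u :
  integral_variety_12 (in_g t1 t7 t8 m1) F d ->
  ex_derive (fun t => F t y1 x2 y2 u) x1 -> ex_derive (fun t => F x1 t x2 y2 u) y1 ->
  ex_derive (fun t => F x1 y1 t y2 u) x2 -> ex_derive (fun t => F x1 y1 x2 t u) y2 ->
  ex_derive (fun t => F x1 y1 x2 y2 t) u ->
  Mset F d (mkpt x1 y1 x2 y2 u (F x1 y1 x2 y2 u)) ->
  let P := pd_x1 F x1 y1 x2 y2 u in
  pd_y1 F x1 y1 x2 y2 u = 0 /\ pd_u F x1 y1 x2 y2 u = 0 /\
  pd_x2 F x1 y1 x2 y2 u = x2 * (2 + (m1 - t7) * P) /\
  pd_y2 F x1 y1 x2 y2 u = y2 * (2 + (m1 - t7) * P) /\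
  dx1_den t1 t7 m1 x1 (x2 ^ 2 + y2 ^ 2) (F x1 y1 x2 y2 u) * P
  = dx1_num t7 m1 x1 (x2 ^ 2 + y2 ^ 2) (F x1 y1 x2 y2 u).
Proof.
  intros [_ [_ Ht]] D1 D2 D3 D4 D5 HM P.
  assert (Z : forall M, in_g t1 t7 t8 m1 M ->
                2 * Re (applyZ M (Phi F) (mkpt x1 y1 x2 y2 u (F x1 y1 x2 y2 u))) = 0)
    by (intros M HM'; rewrite (Ht M HM' _ HM); ring).
  pose proof (Z _ (in_g_E1 t1 t7 t8 m1)) as e1. pose proof (Z _ (in_g_E2 t1 t7 t8 m1)) as e2.
  pose proof (Z _ (in_g_E3 t1 t7 t8 m1)) as e3. pose proof (Z _ (in_g_E4 t1 t7 t8 m1)) as e4.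
  pose proof (Z _ (in_g_E5 t1 t7 t8 m1)) as e5.
  rewrite Re_applyZ_graph in e1, e2, e3, e4, e5 by assumption.
  unfold Defs.E1, E2, E3, E4, E5, vf, dx1_den, dx1_num in *; cbn in e1, e2, e3, e4, e5 |- *.
  fold P in e1, e2, e3, e4, e5.
  set (Py1 := pd_y1 F x1 y1 x2 y2 u) in *. set (Px2 := pd_x2 F x1 y1 x2 y2 u) in *.
  set (Py2 := pd_y2 F x1 y1 x2 y2 u) in *. set (Pu := pd_u F x1 y1 x2 y2 u) in *.
  assert (Hy1 : Py1 = 0) by lra. assert (Hu : Pu = 0) by lra. rewrite Hy1, Hu in *.
  assert (Hx2 : Px2 = x2 * (2 + (m1 - t7) * P)) by nra.
  assert (Hy2 : Py2 = y2 * (2 + (m1 - t7) * P)) by nra.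
  rewrite Hx2, Hy2 in e1. repeat split; auto. nra.
Qed.

(** * Linear differential equations *)

(* Gronwall: [g^2 exp (-2 M s)] is nonincreasing. *)
Lemma linear_ode_zero_pos (g beta : R -> R) b M : 0 <= b ->
  (forall s, 0 <= s <= b -> is_derive g s (beta s * g s) /\ Rabs (beta s) <= M) ->
  g 0 = 0 -> g b = 0.
Proof.
  intros Hb H H0.
  set (h := fun s => g s * g s * exp (- (2 * M) * s)).
  set (dh := fun s => 2 * (g s * g s) * (beta s - M) * exp (- (2 * M) * s)).
  assert (Dh : forall s, 0 <= s <= b -> is_derive h s (dh s)).
  { intros s Hs. destruct (H s Hs) as [Hg _]. unfold h, dh.
    assert (He : is_derive (fun s => exp (- (2 * M) * s)) s (- (2 * M) * exp (- (2 * M) * s)))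
      by (auto_derive; [exact I|ring]).
    eapply is_derive_eq;
      [apply (is_derive_mult _ _ s _ _ (is_derive_mult g g s _ _ Hg Hg Rmult_comm) He Rmult_comm)|].
    unfold plus, mult; simpl. ring. }
  destruct (MVT_gen h 0 b dh) as [c [Hc Hval]];
    rewrite ?Rmin_left, ?Rmax_right in * by lra.
  { intros x Hx. apply Dh; lra. }
  { intros x Hx. eapply is_derive_continuity_pt, Dh; lra. }
  assert (Hdh : dh c <= 0).
  { unfold dh. destruct (H c Hc) as [_ Hbeta].
    assert (beta c - M <= 0) by (assert (X := Rle_abs (beta c)); lra).
    assert (0 <= 2 * (g c * g c) * exp (- (2 * M) * c)) by (assert (X := exp_pos (- (2 * M) * c)); nra).
    nra. }
  assert (Hhb : h b <= 0) by (assert (h 0 = 0) by (unfold h; rewrite H0; ring); nra).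
  unfold h in Hhb. assert (X := exp_pos (- (2 * M) * b)).
  assert (g b * g b <= 0) by (apply Rmult_le_reg_r with (exp (- (2 * M) * b)); lra).
  nra.
Qed.

Lemma linear_ode_zero (g beta : R -> R) b M :
  (forall s, Rabs s <= Rabs b -> is_derive g s (beta s * g s) /\ Rabs (beta s) <= M) ->
  g 0 = 0 -> g b = 0.
Proof.
  intros H H0. destruct (Rle_dec 0 b) as [Hb|Hb].
  - apply (linear_ode_zero_pos g beta b M Hb); [|exact H0].
    intros s Hs. apply H. rewrite !Rabs_pos_eq; lra.
  - replace b with (- - b) by ring.
    apply (linear_ode_zero_pos (fun s => g (- s)) (fun s => - beta (- s)) (- b) M);
      [lra| |now rewrite Ropp_0].
    intros s Hs. destruct (H (- s)) as [Hd Hbeta]; [rewrite Rabs_Ropp, Rabs_pos_eq, Rabs_left; lra|].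
    split; [|now rewrite Rabs_Ropp].
    eapply is_derive_eq; [apply (is_derive_comp g Ropp s _ (-1) Hd); auto_derive; [exact I|ring]|].
    unfold scal; simpl; unfold mult; simpl. ring.
Qed.

(** * [M] is a graph over the profile [f] *)

Definition coefA (t1 t7 m1 : R) : R := t1 + 2 * (m1 - t7).

Definition profile_slope (A b : R) (f : R -> R) (X : R) : R := (4 * X + 2 * b * f X) / (1 + A * X).

Definition profile_ode (A b : R) (f : R -> R) : Prop :=
  f 0 = 0 /\ forall X, 0 < 1 + A * X -> is_derive f X (profile_slope A b f X).

Definition gron_coef (t1 t7 m1 x1 r v : R) : R :=
  t7 * ((m1 - t7) * dx1_num t7 m1 x1 r v + 2 * dx1_den t1 t7 m1 x1 r v) /
  (dx1_den t1 t7 m1 x1 r v * (1 + coefA t1 t7 m1 * (x1 + (m1 - t7) / 2 * v))).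

Lemma slope_defect_identity t1 t7 m1 f x1 r v P :
  let X := x1 + (m1 - t7) / 2 * v in
  dx1_den t1 t7 m1 x1 r v * P = dx1_num t7 m1 x1 r v -> dx1_den t1 t7 m1 x1 r v <> 0 ->
  1 + coefA t1 t7 m1 * X <> 0 ->
  P - profile_slope (coefA t1 t7 m1) t7 f X * (1 + (m1 - t7) / 2 * P)
  = gron_coef t1 t7 m1 x1 r v * (v - r - f X).
Proof.
  intros X HP HD HA.
  replace P with (dx1_num t7 m1 x1 r v / dx1_den t1 t7 m1 x1 r v) by (rewrite <- HP; field; exact HD).
  unfold gron_coef, profile_slope, dx1_den, dx1_num, coefA, X in *.
  field. split; intro Z; [apply HA|apply HD]; lra.
Qed.

Definition graph_defect (F : R -> R -> R -> R -> R -> R) (f : R -> R) (k x1 y1 x2 y2 u : R) : R :=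
  F x1 y1 x2 y2 u - (x2 ^ 2 + y2 ^ 2) - f (x1 + k / 2 * F x1 y1 x2 y2 u).

(* Along a line, [(phi, psi, chi)] plays the role of [(F, r, x1)]; the tangency equations say that
   the two relevant combinations of derivatives are proportional, with factor [mu]. *)
Lemma defect_deriv t1 t7 m1 f (phi psi chi : R -> R) s0 dphi dpsi dchi mu P :
  profile_ode (coefA t1 t7 m1) t7 f ->
  is_derive phi s0 dphi -> is_derive psi s0 dpsi -> is_derive chi s0 dchi ->
  dphi - dpsi = mu * P -> dchi + (m1 - t7) / 2 * dphi = mu * (1 + (m1 - t7) / 2 * P) ->
  dx1_den t1 t7 m1 (chi s0) (psi s0) (phi s0) * P = dx1_num t7 m1 (chi s0) (psi s0) (phi s0) ->
  dx1_den t1 t7 m1 (chi s0) (psi s0) (phi s0) <> 0 ->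
  0 < 1 + coefA t1 t7 m1 * (chi s0 + (m1 - t7) / 2 * phi s0) ->
  is_derive (fun s => phi s - psi s - f (chi s + (m1 - t7) / 2 * phi s)) s0
    (mu * gron_coef t1 t7 m1 (chi s0) (psi s0) (phi s0)
        * (phi s0 - psi s0 - f (chi s0 + (m1 - t7) / 2 * phi s0))).
Proof.
  intros [_ Hf] Hphi Hpsi Hchi E1 E2 HP HD HA.
  assert (I := slope_defect_identity t1 t7 m1 f (chi s0) (psi s0) (phi s0) P HP HD ltac:(lra)).
  set (k := m1 - t7) in *.
  assert (Hin : is_derive (fun s => chi s + k / 2 * phi s) s0 (dchi + k / 2 * dphi)).
  { exact (is_derive_plus chi (fun s => k / 2 * phi s) s0 _ _ Hchi (is_derive_scal phi s0 (k / 2) _ Hphi)). }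
  eapply is_derive_eq.
  { apply (is_derive_minus (fun s => phi s - psi s)); [apply (is_derive_minus _ _ _ _ _ Hphi Hpsi)|].
    apply (is_derive_comp f (fun s => chi s + k / 2 * phi s) s0 _ _ (Hf _ HA) Hin). }
  unfold minus, plus, opp, scal; simpl; unfold mult; simpl.
  rewrite Rmult_assoc, <- I, E2.
  transitivity (dphi - dpsi
    - mu * (1 + k / 2 * P) * profile_slope (coefA t1 t7 m1) t7 f (chi s0 + k / 2 * phi s0)); [ring|].
  rewrite E1. ring.
Qed.

Section DefectVanishes.
Variables (t1 t7 t8 m1 : R) (F : R -> R -> R -> R -> R -> R) (d : R) (f : R -> R) (rho M : R).
Hypothesis HV : integral_variety_12 (in_g t1 t7 t8 m1) F d.
Hypothesis Hf : profile_ode (coefA t1 t7 m1) t7 f.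
Hypothesis Hrho : 0 <= rho < d.
Hypothesis Hbox : forall x1 y1 x2 y2 u, cbox rho x1 y1 x2 y2 u ->
  Rabs (F x1 y1 x2 y2 u) < d /\ dx1_den t1 t7 m1 x1 (x2 ^ 2 + y2 ^ 2) (F x1 y1 x2 y2 u) <> 0 /\
  0 < 1 + coefA t1 t7 m1 * (x1 + (m1 - t7) / 2 * F x1 y1 x2 y2 u) /\
  Rabs (gron_coef t1 t7 m1 x1 (x2 ^ 2 + y2 ^ 2) (F x1 y1 x2 y2 u)) <= M.

Local Notation L := (graph_defect F f (m1 - t7)).
Local Notation beta x1 y1 x2 y2 u := (gron_coef t1 t7 m1 x1 (x2 ^ 2 + y2 ^ 2) (F x1 y1 x2 y2 u)).

Lemma defect_deriv_at x1 y1 x2 y2 u : cbox rho x1 y1 x2 y2 u ->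
  is_derive (fun s => L s y1 x2 y2 u) x1 (1 * beta x1 y1 x2 y2 u * L x1 y1 x2 y2 u) /\
  is_derive (fun s => L x1 s x2 y2 u) y1 (0 * beta x1 y1 x2 y2 u * L x1 y1 x2 y2 u) /\
  is_derive (fun s => L x1 y1 s y2 u) x2 ((m1 - t7) * x2 * beta x1 y1 x2 y2 u * L x1 y1 x2 y2 u) /\
  is_derive (fun s => L x1 y1 x2 s u) y2 ((m1 - t7) * y2 * beta x1 y1 x2 y2 u * L x1 y1 x2 y2 u) /\
  is_derive (fun s => L x1 y1 x2 y2 s) u (0 * beta x1 y1 x2 y2 u * L x1 y1 x2 y2 u).
Proof.
  intros Hb. destruct (Hbox _ _ _ _ _ Hb) as (HFd & HD & HA & _).
  destruct (proj1 (proj2 HV)) as (c & _ & Hs).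
  destruct (series_rep_ex_derive5 c d F rho x1 y1 x2 y2 u Hs Hrho Hb) as (D1 & D2 & D3 & D4 & D5).
  assert (HM : Mset F d (mkpt x1 y1 x2 y2 u (F x1 y1 x2 y2 u))).
  { destruct Hb as (B1 & B2 & B3 & B4 & B5). repeat split; cbn; lra. }
  destruct (tangency_eqs t1 t7 t8 m1 F d x1 y1 x2 y2 u HV D1 D2 D3 D4 D5 HM) as (E2 & E5 & E3 & E4 & E1).
  set (P := pd_x1 F x1 y1 x2 y2 u) in *.
  unfold graph_defect. refine (conj _ (conj _ (conj _ (conj _ _))));
    [apply (defect_deriv t1 t7 m1 f (fun s => F s y1 x2 y2 u) (fun _ => x2 ^ 2 + y2 ^ 2) (fun s => s)
              x1 P 0 1 1 P Hf)
    |apply (defect_deriv t1 t7 m1 f (fun s => F x1 s x2 y2 u) (fun _ => x2 ^ 2 + y2 ^ 2) (fun _ => x1)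
              y1 (pd_y1 F x1 y1 x2 y2 u) 0 0 0 P Hf)
    |apply (defect_deriv t1 t7 m1 f (fun s => F x1 y1 s y2 u) (fun s => s ^ 2 + y2 ^ 2) (fun _ => x1)
              x2 (pd_x2 F x1 y1 x2 y2 u) (2 * x2) 0 ((m1 - t7) * x2) P Hf)
    |apply (defect_deriv t1 t7 m1 f (fun s => F x1 y1 x2 s u) (fun s => x2 ^ 2 + s ^ 2) (fun _ => x1)
              y2 (pd_y2 F x1 y1 x2 y2 u) (2 * y2) 0 ((m1 - t7) * y2) P Hf)
    |apply (defect_deriv t1 t7 m1 f (fun s => F x1 y1 x2 y2 s) (fun _ => x2 ^ 2 + y2 ^ 2) (fun _ => x1)
              u (pd_u F x1 y1 x2 y2 u) 0 0 0 P Hf)];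
    first [exact E1 | exact HD | exact HA | apply Derive_correct; assumption
          | auto_derive; try exact I; ring | rewrite ?E2, ?E3, ?E4, ?E5; field].
Qed.

(* Walk from the origin to the point one coordinate at a time. *)
Lemma defect_zero x1 y1 x2 y2 u : cbox rho x1 y1 x2 y2 u -> L x1 y1 x2 y2 u = 0.
Proof.
  intros (B1 & B2 & B3 & B4 & B5).
  assert (Hc : forall a b c e g, Rabs a <= rho -> Rabs b <= rho -> Rabs c <= rho -> Rabs e <= rho ->
             Rabs g <= rho -> cbox rho a b c e g) by (intros; repeat split; assumption).
  assert (R0 : Rabs 0 <= rho) by (rewrite Rabs_R0; lra).
  assert (at_origin : L 0 0 0 0 0 = 0).
  { destruct (proj1 (proj2 HV)) as (c & Hn & Hs).
    unfold graph_defect. rewrite (series_rep_zero c d F Hn Hs) by lra.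
    rewrite Rmult_0_r, Rplus_0_r, (proj1 Hf). simpl. ring. }
  assert (on_x1 : L x1 0 0 0 0 = 0).
  { apply (linear_ode_zero (fun s => L s 0 0 0 0) (fun s => 1 * beta s 0 0 0 0) x1 M); [|exact at_origin].
    intros s Hs. assert (Hb : cbox rho s 0 0 0 0) by (apply Hc; lra).
    split; [apply (defect_deriv_at _ _ _ _ _ Hb)|]. rewrite Rmult_1_l. apply (Hbox _ _ _ _ _ Hb). }
  assert (on_x1y1 : L x1 y1 0 0 0 = 0).
  { apply (linear_ode_zero (fun s => L x1 s 0 0 0) (fun s => 0 * beta x1 s 0 0 0) y1 0); [|exact on_x1].
    intros s Hs. assert (Hb : cbox rho x1 s 0 0 0) by (apply Hc; lra).
    split; [apply (defect_deriv_at _ _ _ _ _ Hb)|]. rewrite Rmult_0_l, Rabs_R0. lra. }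
  assert (on_x1y1x2 : L x1 y1 x2 0 0 = 0).
  { apply (linear_ode_zero (fun s => L x1 y1 s 0 0) (fun s => (m1 - t7) * s * beta x1 y1 s 0 0) x2
             (Rabs (m1 - t7) * rho * M)); [|exact on_x1y1].
    intros s Hs. assert (Hb : cbox rho x1 y1 s 0 0) by (apply Hc; lra).
    split; [apply (defect_deriv_at _ _ _ _ _ Hb)|]. apply Rabs_mult3_le; [lra|apply (Hbox _ _ _ _ _ Hb)]. }
  assert (on_x1y1x2y2 : L x1 y1 x2 y2 0 = 0).
  { apply (linear_ode_zero (fun s => L x1 y1 x2 s 0) (fun s => (m1 - t7) * s * beta x1 y1 x2 s 0) y2
             (Rabs (m1 - t7) * rho * M)); [|exact on_x1y1x2].
    intros s Hs. assert (Hb : cbox rho x1 y1 x2 s 0) by (apply Hc; lra).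
    split; [apply (defect_deriv_at _ _ _ _ _ Hb)|]. apply Rabs_mult3_le; [lra|apply (Hbox _ _ _ _ _ Hb)]. }
  apply (linear_ode_zero (fun s => L x1 y1 x2 y2 s) (fun s => 0 * beta x1 y1 x2 y2 s) u 0);
    [|exact on_x1y1x2y2].
  intros s Hs. assert (Hb : cbox rho x1 y1 x2 y2 s) by (apply Hc; lra).
  split; [apply (defect_deriv_at _ _ _ _ _ Hb)|]. rewrite Rmult_0_l, Rabs_R0. lra.
Qed.
End DefectVanishes.

Lemma dx1_num_bound t7 m1 x1 r v : Rabs x1 <= 1 -> Rabs r <= 1 -> Rabs v <= 1 ->
  Rabs (dx1_num t7 m1 x1 r v) <= 4 + 2 * Rabs m1 + 2 * Rabs t7.
Proof.
  intros Hx Hr Hv. unfold dx1_num, Rminus.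
  assert (A1 := Rabs_mult_le_l 4 x1 1 Hx). assert (A2 := Rabs_mult_le_l (2 * m1) v 1 Hv).
  assert (A3 := Rabs_mult_le_l (2 * t7) r 1 Hr).
  rewrite (Rabs_mult 2 m1), (Rabs_pos_eq 2) in A2 by lra.
  rewrite (Rabs_mult 2 t7), (Rabs_pos_eq 2) in A3 by lra. rewrite (Rabs_pos_eq 4) in A1 by lra.
  pose proof (Rabs_triang (4 * x1 + 2 * m1 * v) (- (2 * t7 * r))). rewrite Rabs_Ropp in *.
  pose proof (Rabs_triang (4 * x1) (2 * m1 * v)). lra.
Qed.

Lemma gron_coef_bound t1 t7 m1 x1 r v N :
  1/2 <= dx1_den t1 t7 m1 x1 r v <= 2 ->
  1/2 <= 1 + coefA t1 t7 m1 * (x1 + (m1 - t7) / 2 * v) ->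
  Rabs (dx1_num t7 m1 x1 r v) <= N ->
  Rabs (gron_coef t1 t7 m1 x1 r v) <= 4 * Rabs t7 * (Rabs (m1 - t7) * N + 4).
Proof.
  intros Den Ax Num. unfold gron_coef.
  assert (HN : 0 <= N) by (eapply Rle_trans; [apply Rabs_pos|exact Num]).
  assert (P : 0 <= Rabs t7 * (Rabs (m1 - t7) * N + 4))
    by (apply Rmult_le_pos; [apply Rabs_pos|]; pose proof (Rmult_le_pos _ _ (Rabs_pos (m1 - t7)) HN); lra).
  assert (Q : 1/4 <= dx1_den t1 t7 m1 x1 r v * (1 + coefA t1 t7 m1 * (x1 + (m1 - t7) / 2 * v))) by nra.
  apply Rabs_div_le; [lra|].
  apply Rle_trans with (Rabs t7 * (Rabs (m1 - t7) * N + 4)); [|nra].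
  rewrite Rabs_mult. apply Rmult_le_compat_l; [apply Rabs_pos|].
  eapply Rle_trans; [apply Rabs_triang|].
  rewrite !Rabs_mult, (Rabs_pos_eq 2), (Rabs_pos_eq (dx1_den _ _ _ _ _ _)) by lra.
  pose proof (Rabs_pos (m1 - t7)). apply Rplus_le_compat; [apply Rmult_le_compat_l|]; lra.
Qed.

Lemma tangency_coefs_bounded t1 t7 m1 : exists delta M, 0 < delta <= 1 /\
  forall x1 r v, Rabs x1 <= delta -> 0 <= r <= delta -> Rabs v <= delta ->
    1/2 <= dx1_den t1 t7 m1 x1 r v /\
    1/2 <= 1 + coefA t1 t7 m1 * (x1 + (m1 - t7) / 2 * v) /\
    Rabs (gron_coef t1 t7 m1 x1 r v) <= M.
Proof.
  set (k := m1 - t7). set (A := coefA t1 t7 m1). set (g := 1/2 * k * (t1 - 2 * t7)).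
  set (C := 1 + Rabs t1 + Rabs g + Rabs (t7 * k) + Rabs A * (1 + Rabs (k / 2))).
  assert (HC : 1 <= C).
  { pose proof (Rabs_pos t1); pose proof (Rabs_pos g); pose proof (Rabs_pos (t7 * k)).
    pose proof (Rabs_pos A); pose proof (Rabs_pos (k / 2)). unfold C. nra. }
  set (e := / (4 * C)).
  assert (He : 0 < e <= 1/4).
  { split; [apply Rinv_0_lt_compat; lra|]. unfold e. replace (1/4) with (/ 4) by field.
    apply Rinv_le_contravar; lra. }
  assert (HCe : e + Rabs t1 * e + Rabs g * e + Rabs (t7 * k) * e + Rabs A * (1 + Rabs (k / 2)) * e = 1/4).
  { transitivity (C * e); [unfold C; ring|]. unfold e. field. lra. }
  exists e, (4 * Rabs t7 * (Rabs k * (4 + 2 * Rabs m1 + 2 * Rabs t7) + 4)).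
  split; [lra|]. intros x1 r v Hx Hr Hv.
  assert (Hr' : Rabs r <= e) by (rewrite Rabs_pos_eq; lra).
  assert (T1 := Rabs_mult_le_l t1 x1 e Hx). assert (T2 := Rabs_mult_le_l g v e Hv).
  assert (T3 := Rabs_mult_le_l (t7 * k) r e Hr').
  assert (TX : Rabs (x1 + k / 2 * v) <= (1 + Rabs (k / 2)) * e).
  { eapply Rle_trans; [apply Rabs_triang|]. pose proof (Rabs_mult_le_l (k / 2) v e Hv). lra. }
  assert (TA := Rabs_mult_le_l A _ _ TX).
  assert (Hden : Rabs (t1 * x1 + g * v + t7 * k * r) <= 1/4).
  { pose proof (Rabs_triang (t1 * x1 + g * v) (t7 * k * r)). pose proof (Rabs_triang (t1 * x1) (g * v)).
    pose proof (Rabs_pos (A * (x1 + k / 2 * v))). lra. }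
  assert (HX : Rabs (A * (x1 + k / 2 * v)) <= 1/4).
  { pose proof (Rabs_pos (t1 * x1)); pose proof (Rabs_pos (g * v)); pose proof (Rabs_pos (t7 * k * r)). lra. }
  apply Rabs_le_between in Hden. apply Rabs_le_between in HX.
  assert (Den : 1/2 <= dx1_den t1 t7 m1 x1 r v <= 2) by (unfold dx1_den; fold k; unfold g in Hden; lra).
  assert (Ax : 1/2 <= 1 + A * (x1 + k / 2 * v)) by lra.
  split; [lra|split; [exact Ax|]].
  apply gron_coef_bound; [exact Den|exact Ax|apply dx1_num_bound; lra].
Qed.

Lemma continuous_at_zero_small (f : R -> R) l : is_derive f 0 l -> f 0 = 0 ->
  forall e, 0 < e -> exists delta, 0 < delta /\ forall X, Rabs X < delta -> Rabs (f X) < e.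
Proof.
  intros H H0 e He. destruct (is_derive_continuity_pt f 0 l H e He) as [a [Ha Hc]].
  exists a. split; [exact Ha|]. intros X HX. destruct (Req_dec X 0) as [->|NX].
  - rewrite H0, Rabs_R0. exact He.
  - specialize (Hc X). simpl in Hc. unfold R_dist in Hc. rewrite H0, !Rminus_0_r in Hc.
    apply Hc. split; [split; [exact I|congruence]|exact HX].
Qed.

Lemma mult_le_1_of_le_inv a x : 0 < a -> x <= / a -> a * x <= 1.
Proof.
  intros Ha Hx. apply Rle_trans with (a * / a); [apply Rmult_le_compat_l; lra|].
  rewrite Rinv_r by lra. lra.
Qed.

Lemma profile_contraction A b f : profile_ode A b f -> forall K, 0 < K ->
  exists delta, 0 < delta /\ forall X, Rabs X <= delta ->
    1/2 <= 1 + A * X /\ K * Rabs (profile_slope A b f X) <= 1.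
Proof.
  intros [H0 Hf] K HK. pose proof (Rabs_pos b) as Pb. pose proof (Rabs_pos A) as PA.
  destruct (continuous_at_zero_small f _ (Hf 0 ltac:(lra)) H0 (/ (8 * (Rabs b + 1) * K)))
    as [d1 [Hd1 Hsmall]]; [apply Rinv_0_lt_compat; nra|].
  set (delta := Rmin (d1 / 2) (Rmin (/ (16 * K)) (/ (2 * (Rabs A + 1))))).
  assert (Hd : 0 < delta) by (repeat apply Rmin_pos; try apply Rinv_0_lt_compat; lra).
  assert (D1 : delta <= d1 / 2) by apply Rmin_l.
  assert (D2 : delta <= / (16 * K)) by (eapply Rle_trans; [apply Rmin_r|apply Rmin_l]).
  assert (D3 : delta <= / (2 * (Rabs A + 1))) by (eapply Rle_trans; apply Rmin_r).
  exists delta. split; [exact Hd|]. intros X HX.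
  assert (X2 := mult_le_1_of_le_inv (16 * K) (Rabs X) ltac:(lra) ltac:(lra)).
  assert (X3 := mult_le_1_of_le_inv (2 * (Rabs A + 1)) (Rabs X) ltac:(lra) ltac:(lra)).
  assert (Hf' := mult_le_1_of_le_inv (8 * (Rabs b + 1) * K) (Rabs (f X)) ltac:(nra)
                   (Rlt_le _ _ (Hsmall X ltac:(lra)))).
  assert (HAX : Rabs (A * X) <= 1/2) by (rewrite Rabs_mult; pose proof (Rabs_pos X); nra).
  apply Rabs_le_between in HAX.
  split; [lra|].
  unfold profile_slope. rewrite Rabs_div by lra. rewrite (Rabs_pos_eq (1 + A * X)) by lra.
  apply Rmult_le_reg_r with (1 + A * X); [lra|].
  replace (K * (Rabs (4 * X + 2 * b * f X) / (1 + A * X)) * (1 + A * X))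
    with (K * Rabs (4 * X + 2 * b * f X)) by (field; lra).
  assert (T : Rabs (4 * X + 2 * b * f X) <= 4 * Rabs X + 2 * Rabs b * Rabs (f X)).
  { eapply Rle_trans; [apply Rabs_triang|].
    rewrite !Rabs_mult, (Rabs_pos_eq 4), (Rabs_pos_eq 2) by lra. lra. }
  pose proof (Rabs_pos (f X)); pose proof (Rabs_pos X). nra.
Qed.

(* [|k/2| |f'| <= 1/2] makes [v |-> r + f (x1 + k/2 v)] a contraction. *)
Lemma profile_fixed_point_unique (f g : R -> R) k r x1 v w delta :
  (forall X, Rabs X <= delta -> is_derive f X (g X) /\ Rabs k * Rabs (g X) <= 1) ->
  Rabs (x1 + k / 2 * v) <= delta -> Rabs (x1 + k / 2 * w) <= delta ->
  v = r + f (x1 + k / 2 * v) -> w = r + f (x1 + k / 2 * w) -> v = w.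
Proof.
  intros Hf Hv Hw Ev Ew.
  set (Xv := x1 + k / 2 * v) in *. set (Xw := x1 + k / 2 * w) in *.
  assert (Hin : forall X, Rmin Xw Xv <= X <= Rmax Xw Xv -> Rabs X <= delta).
  { intros X HX. apply Rabs_le_between in Hv, Hw. apply Rabs_le_between.
    unfold Rmin, Rmax in HX. destruct (Rle_dec Xw Xv); lra. }
  destruct (MVT_gen f Xw Xv g) as [xi [Hxi Hmvt]].
  { intros X HX. apply Hf, Hin. lra. }
  { intros X HX. eapply is_derive_continuity_pt, Hf, Hin, HX. }
  destruct (Hf xi (Hin xi Hxi)) as [_ Hg].
  assert (E : v - w = g xi * (k / 2) * (v - w)).
  { replace (g xi * (k / 2) * (v - w)) with (g xi * (Xv - Xw)) by (unfold Xv, Xw; field). lra. }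
  assert (Ea : Rabs (v - w) = Rabs (g xi) * Rabs k / 2 * Rabs (v - w)).
  { rewrite E at 1. rewrite !Rabs_mult, Rabs_div, (Rabs_pos_eq 2) by lra. field. }
  pose proof (Rabs_pos (v - w)). pose proof (Rabs_pos (g xi)). pose proof (Rabs_pos k).
  assert (Z : Rabs (v - w) = 0) by nra.
  destruct (Req_dec (v - w) 0) as [E0|E0]; [lra|]. exfalso. exact (Rabs_no_R0 _ E0 Z).
Qed.

Lemma sq_sum_le_box x2 y2 rho : 0 <= rho <= 1/2 -> Rabs x2 <= rho -> Rabs y2 <= rho ->
  0 <= x2 ^ 2 + y2 ^ 2 <= rho.
Proof.
  intros Hr H2 H3. rewrite <- (pow2_abs x2), <- (pow2_abs y2).
  pose proof (Rabs_pos x2); pose proof (Rabs_pos y2). split; nra.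
Qed.

Lemma affine_arg_small x1 w k e delta : Rabs x1 <= e -> Rabs w <= e -> (Rabs k + 2) * e <= delta ->
  Rabs (x1 + k / 2 * w) <= delta.
Proof.
  intros H1 H2 H. eapply Rle_trans; [apply Rabs_triang|].
  rewrite Rabs_mult, Rabs_div, (Rabs_pos_eq 2) by lra.
  pose proof (Rabs_pos k); pose proof (Rabs_pos w). nra.
Qed.

Lemma graph_box t1 t7 t8 m1 F d f :
  integral_variety_12 (in_g t1 t7 t8 m1) F d -> profile_ode (coefA t1 t7 m1) t7 f ->
  exists rho M df, 0 < rho < d /\
    (forall X, Rabs X <= df -> 0 < 1 + coefA t1 t7 m1 * X /\
       is_derive f X (profile_slope (coefA t1 t7 m1) t7 f X) /\
       Rabs (m1 - t7) * Rabs (profile_slope (coefA t1 t7 m1) t7 f X) <= 1) /\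
    (forall x1 w, Rabs x1 <= rho -> Rabs w <= rho -> Rabs (x1 + (m1 - t7) / 2 * w) <= df) /\
    (forall x1 y1 x2 y2 u, cbox rho x1 y1 x2 y2 u ->
       Rabs (x1 + (m1 - t7) / 2 * F x1 y1 x2 y2 u) <= df /\
       Rabs (F x1 y1 x2 y2 u) < d /\ dx1_den t1 t7 m1 x1 (x2 ^ 2 + y2 ^ 2) (F x1 y1 x2 y2 u) <> 0 /\
       0 < 1 + coefA t1 t7 m1 * (x1 + (m1 - t7) / 2 * F x1 y1 x2 y2 u) /\
       Rabs (gron_coef t1 t7 m1 x1 (x2 ^ 2 + y2 ^ 2) (F x1 y1 x2 y2 u)) <= M).
Proof.
  intros HV Hf. pose proof HV as (Hd & (c & Hn & Hs) & _).
  destruct (tangency_coefs_bounded t1 t7 m1) as (delta & M & Hdelta & Hcoef).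
  assert (Hk0 := Rabs_pos (m1 - t7)).
  destruct (profile_contraction _ t7 f Hf (Rabs (m1 - t7) + 1) ltac:(lra)) as (df & Hdf & Hcontr).
  set (k := m1 - t7) in *. set (A := coefA t1 t7 m1) in *.
  set (e := Rmin (df / (Rabs k + 2)) (Rmin delta (Rmin (1/2) (d / 2)))).
  assert (He : 0 < e) by (repeat apply Rmin_pos; try apply Rdiv_lt_0_compat; lra).
  assert (He1 : (Rabs k + 2) * e <= df).
  { apply Rle_trans with ((Rabs k + 2) * (df / (Rabs k + 2))); [apply Rmult_le_compat_l; [lra|apply Rmin_l]|].
    right. field. lra. }
  assert (He2 : e <= delta) by (eapply Rle_trans; [apply Rmin_r|apply Rmin_l]).
  assert (He3 : e <= 1/2) by (do 2 (eapply Rle_trans; [apply Rmin_r|]); apply Rmin_l).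
  assert (He4 : e <= d / 2) by (do 3 (eapply Rle_trans; [apply Rmin_r|]); apply Rle_refl).
  destruct (series_rep_small c d F Hn Hs Hd e He) as (rF & HrF & HFsmall).
  exists (Rmin rF e), M, df.
  assert (Hr1 : Rmin rF e <= rF) by apply Rmin_l. assert (Hr2 : Rmin rF e <= e) by apply Rmin_r.
  assert (Hr0 : 0 < Rmin rF e) by (apply Rmin_pos; lra).
  split; [lra|split; [|split]].
  - intros X HX. destruct (Hcontr X HX) as [H1 H2].
    split; [lra|split; [apply (proj2 Hf); lra|]].
    pose proof (Rabs_pos (profile_slope A t7 f X)). nra.
  - intros x1 w H1 H2. apply (affine_arg_small _ _ _ e); lra.
  - intros x1 y1 x2 y2 u Hb.
    assert (HFe : Rabs (F x1 y1 x2 y2 u) <= e).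
    { apply (HFsmall (vec5 x1 y1 x2 y2 u)).
      intros j Hj. eapply Rle_trans; [apply (cbox_vec5 _ _ _ _ _ _ Hb j Hj)|exact Hr1]. }
    destruct Hb as (B1 & B2 & B3 & B4 & B5).
    destruct (Hcoef x1 (x2 ^ 2 + y2 ^ 2) (F x1 y1 x2 y2 u)) as (C1 & C2 & C3);
      [lra|pose proof (sq_sum_le_box x2 y2 (Rmin rF e) ltac:(lra) B3 B4); lra|lra|].
    split; [apply (affine_arg_small _ _ _ e); lra|].
    split; [lra|split; [intro; lra|split; lra]].
Qed.

Lemma integral_variety_graph t1 t7 t8 m1 F d f :
  integral_variety_12 (in_g t1 t7 t8 m1) F d -> profile_ode (coefA t1 t7 m1) t7 f ->
  exists d', 0 < d' <= d /\ forall p, in_box d' p ->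
    0 < 1 + coefA t1 t7 m1 * (x1_ p + (m1 - t7) / 2 * v_ p) /\
    (v_ p = F (x1_ p) (y1_ p) (x2_ p) (y2_ p) (u_ p) <->
     v_ p = x2_ p ^ 2 + y2_ p ^ 2 + f (x1_ p + (m1 - t7) / 2 * v_ p)).
Proof.
  intros HV Hf.
  destruct (graph_box t1 t7 t8 m1 F d f HV Hf) as (rho & M & df & Hrho & Hcontr & Harg & Hbox).
  exists rho. split; [lra|]. intros p (B1 & B2 & B3 & B4 & B5 & B6).
  assert (Hb : cbox rho (x1_ p) (y1_ p) (x2_ p) (y2_ p) (u_ p)) by (repeat split; lra).
  assert (HL : graph_defect F f (m1 - t7) (x1_ p) (y1_ p) (x2_ p) (y2_ p) (u_ p) = 0).
  { apply (defect_zero t1 t7 t8 m1 F d f rho M HV Hf); [lra| |exact Hb].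
    intros x1 y1 x2 y2 u Hb'. apply (Hbox _ _ _ _ _ Hb'). }
  unfold graph_defect in HL.
  assert (HXv := Harg (x1_ p) (v_ p) ltac:(lra) ltac:(lra)).
  split; [apply (Hcontr _ HXv)|].
  split; [intros ->; lra|]. intros Hv.
  apply (profile_fixed_point_unique f (profile_slope (coefA t1 t7 m1) t7 f) (m1 - t7)
           (x2_ p ^ 2 + y2_ p ^ 2) (x1_ p) _ _ df); [|exact HXv|apply (Hbox _ _ _ _ _ Hb)|exact Hv|lra].
  intros X HX. apply (Hcontr X HX).
Qed.

(** * Affine normalisation and the five models *)

Definition lin (c0 c1 c2 c3 c4 c5 c6 : R) (p : pt) : R :=
  c0 + c1 * x1_ p + c2 * y1_ p + c3 * x2_ p + c4 * y2_ p + c5 * u_ p + c6 * v_ p.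

Lemma openC_and (W1 W2 : pt -> Prop) : openC W1 -> openC W2 -> openC (fun q => W1 q /\ W2 q).
Proof.
  intros H1 H2 q [Hq1 Hq2].
  destruct (H1 q Hq1) as (e1 & He1 & N1). destruct (H2 q Hq2) as (e2 & He2 & N2).
  exists (Rmin e1 e2). split; [apply Rmin_pos; assumption|].
  assert (Mon : forall e e' p, e <= e' -> near q e p -> near q e' p)
    by (intros e e' p He (A1 & A2 & A3 & A4 & A5 & A6); repeat split; lra).
  intros p Hp. split; [apply N1, (Mon _ _ _ (Rmin_l e1 e2) Hp)|apply N2, (Mon _ _ _ (Rmin_r e1 e2) Hp)].
Qed.

Lemma lin_near c0 c1 c2 c3 c4 c5 c6 q e p : near q e p ->
  Rabs (lin c0 c1 c2 c3 c4 c5 c6 p - lin c0 c1 c2 c3 c4 c5 c6 q)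
  <= (Rabs c1 + Rabs c2 + Rabs c3 + Rabs c4 + Rabs c5 + Rabs c6) * e.
Proof.
  intros (N1 & N2 & N3 & N4 & N5 & N6).
  replace (lin c0 c1 c2 c3 c4 c5 c6 p - lin c0 c1 c2 c3 c4 c5 c6 q) with
    (c1 * (x1_ p - x1_ q) + c2 * (y1_ p - y1_ q) + c3 * (x2_ p - x2_ q) + c4 * (y2_ p - y2_ q)
     + c5 * (u_ p - u_ q) + c6 * (v_ p - v_ q)) by (unfold lin; ring).
  assert (T : forall c x, Rabs x < e -> Rabs (c * x) <= Rabs c * e)
    by (intros c x H; apply Rabs_mult_le_l; lra).
  pose proof (T c1 _ N1); pose proof (T c2 _ N2); pose proof (T c3 _ N3).
  pose proof (T c4 _ N4); pose proof (T c5 _ N5); pose proof (T c6 _ N6).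
  set (a1 := c1 * (x1_ p - x1_ q)) in *. set (a2 := c2 * (y1_ p - y1_ q)) in *.
  set (a3 := c3 * (x2_ p - x2_ q)) in *. set (a4 := c4 * (y2_ p - y2_ q)) in *.
  set (a5 := c5 * (u_ p - u_ q)) in *. set (a6 := c6 * (v_ p - v_ q)) in *.
  pose proof (Rabs_triang (a1 + a2 + a3 + a4 + a5) a6). pose proof (Rabs_triang (a1 + a2 + a3 + a4) a5).
  pose proof (Rabs_triang (a1 + a2 + a3) a4). pose proof (Rabs_triang (a1 + a2) a3).
  pose proof (Rabs_triang a1 a2). lra.
Qed.

Lemma openC_lin_lt c0 c1 c2 c3 c4 c5 c6 d' :
  openC (fun q => Rabs (lin c0 c1 c2 c3 c4 c5 c6 q) < d').
Proof.
  intros q Hq.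
  set (K := Rabs c1 + Rabs c2 + Rabs c3 + Rabs c4 + Rabs c5 + Rabs c6).
  assert (K0 : 0 <= K) by (unfold K; pose proof (Rabs_pos c1); pose proof (Rabs_pos c2);
    pose proof (Rabs_pos c3); pose proof (Rabs_pos c4); pose proof (Rabs_pos c5);
    pose proof (Rabs_pos c6); lra).
  set (g := d' - Rabs (lin c0 c1 c2 c3 c4 c5 c6 q)).
  exists (g / (K + 1)). split; [apply Rdiv_lt_0_compat; unfold g; lra|].
  intros p Hp. assert (L := lin_near c0 c1 c2 c3 c4 c5 c6 _ _ _ Hp). fold K in L.
  assert (E : K * (g / (K + 1)) < g).
  { apply Rmult_lt_reg_r with (K + 1); [lra|].
    replace (K * (g / (K + 1)) * (K + 1)) with (K * g) by (field; lra). unfold g in *. nra. }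
  pose proof (Rabs_triang (lin c0 c1 c2 c3 c4 c5 c6 p - lin c0 c1 c2 c3 c4 c5 c6 q)
                          (lin c0 c1 c2 c3 c4 c5 c6 q)).
  replace (lin c0 c1 c2 c3 c4 c5 c6 p - lin c0 c1 c2 c3 c4 c5 c6 q + lin c0 c1 c2 c3 c4 c5 c6 q)
    with (lin c0 c1 c2 c3 c4 c5 c6 p) in * by ring.
  unfold g in *. lra.
Qed.

Lemma openC_ext (W1 W2 : pt -> Prop) : (forall q, W1 q <-> W2 q) -> openC W1 -> openC W2.
Proof.
  intros E H q Hq. destruct (H q (proj2 (E q) Hq)) as (e & He & N).
  exists e. split; [exact He|]. intros p Hp. apply E, N, Hp.
Qed.

Definition row_re (A : cmat) (i : nat) (c : C) : pt -> R :=
  lin (Re c) (Re (A i 0%nat)) (- Im (A i 0%nat)) (Re (A i 1%nat)) (- Im (A i 1%nat))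
      (Re (A i 2%nat)) (- Im (A i 2%nat)).
Definition row_im (A : cmat) (i : nat) (c : C) : pt -> R :=
  lin (Im c) (Im (A i 0%nat)) (Re (A i 0%nat)) (Im (A i 1%nat)) (Re (A i 1%nat))
      (Im (A i 2%nat)) (Re (A i 2%nat)).

Lemma openC_in_box_aff A b d' : openC (fun q => in_box d' (aff A b q)).
Proof.
  apply (openC_ext (fun q =>
    Rabs (row_re A 0 (z1_ b) q) < d' /\ Rabs (row_im A 0 (z1_ b) q) < d' /\
    Rabs (row_re A 1 (z2_ b) q) < d' /\ Rabs (row_im A 1 (z2_ b) q) < d' /\
    Rabs (row_re A 2 (w_ b) q) < d' /\ Rabs (row_im A 2 (w_ b) q) < d')).
  - intros q.
    assert (E : x1_ (aff A b q) = row_re A 0 (z1_ b) q /\ y1_ (aff A b q) = row_im A 0 (z1_ b) q /\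
                x2_ (aff A b q) = row_re A 1 (z2_ b) q /\ y2_ (aff A b q) = row_im A 1 (z2_ b) q /\
                u_ (aff A b q) = row_re A 2 (w_ b) q /\ v_ (aff A b q) = row_im A 2 (w_ b) q).
    { unfold row_re, row_im, lin, aff, x1_, y1_, x2_, y2_, u_, v_, z1_, z2_, w_, Re, Im.
      cbn. repeat split; ring. }
    unfold in_box. destruct E as (-> & -> & -> & -> & -> & ->). reflexivity.
  - repeat apply openC_and; apply openC_lin_lt.
Qed.

Lemma affinely_equiv_of_box F d (S : pt -> Prop) A b Ai bi d' :
  det3 A <> RtoC 0 -> 0 < d' <= d ->
  (forall p, aff Ai bi (aff A b p) = p) -> (forall q, aff A b (aff Ai bi q) = q) ->
  (forall p, in_box d' p -> (v_ p = F (x1_ p) (y1_ p) (x2_ p) (y2_ p) (u_ p) <-> S (aff A b p))) ->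
  affinely_equiv F d S.
Proof.
  intros Hdet Hd' Hl Hr H.
  exists d', A, b, (fun q => in_box d' (aff Ai bi q)).
  split; [lra|split; [lra|split; [exact Hdet|split; [apply openC_in_box_aff|]]]].
  intros q. split.
  - intros [HS HW]. exists (aff Ai bi q). rewrite Hr.
    split; [split; [exact HW|]|reflexivity]. apply (H _ HW). rewrite Hr. exact HS.
  - intros [p [[Hb Hv] ->]]. split; [apply H; assumption|]. rewrite Hl. exact Hb.
Qed.

(* The map [(z1, z2, w) |-> (lam (z1 - i k/2 w), mu z2, i tau z1 + (sig + tau k/2) w + i kap)]. *)
Definition Am (lam mu sig tau k : R) : cmat := fun i j =>
  match i, j with
  | 0%nat, 0%nat => RtoC lam
  | 0%nat, 2%nat => (0, - (lam * k / 2))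
  | 1%nat, 1%nat => RtoC mu
  | 2%nat, 0%nat => (0, tau)
  | 2%nat, 2%nat => RtoC (sig + tau * k / 2)
  | _, _ => RtoC 0
  end.

Definition bm (kap : R) : pt := ((RtoC 0, RtoC 0), (0, kap)).

Definition Am_inv (lam mu sig tau k : R) : cmat := fun i j =>
  match i, j with
  | 0%nat, 0%nat => RtoC (1 / lam + k * tau / (2 * lam * sig))
  | 0%nat, 2%nat => (0, k / (2 * sig))
  | 1%nat, 1%nat => RtoC (1 / mu)
  | 2%nat, 0%nat => (0, - (tau / (lam * sig)))
  | 2%nat, 2%nat => RtoC (1 / sig)
  | _, _ => RtoC 0
  end.

Definition bm_inv (sig k kap : R) : pt := ((RtoC (k * kap / (2 * sig)), RtoC 0), (0, - (kap / sig))).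

Lemma aff_Am_coords lam mu sig tau k kap p :
  let q := aff (Am lam mu sig tau k) (bm kap) p in
  x1_ q = lam * (x1_ p + k / 2 * v_ p) /\ y1_ q = lam * (y1_ p - k / 2 * u_ p) /\
  x2_ q = mu * x2_ p /\ y2_ q = mu * y2_ p /\
  u_ q = - tau * y1_ p + (sig + tau * k / 2) * u_ p /\
  v_ q = sig * v_ p + tau * (x1_ p + k / 2 * v_ p) + kap.
Proof.
  unfold aff, Am, bm, x1_, y1_, x2_, y2_, u_, v_, z1_, z2_, w_, Re, Im, Cplus, Cmult, RtoC; simpl.
  repeat split; field.
Qed.

Lemma pt_eq (p q : pt) : x1_ p = x1_ q -> y1_ p = y1_ q -> x2_ p = x2_ q -> y2_ p = y2_ q ->
  u_ p = u_ q -> v_ p = v_ q -> p = q.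
Proof.
  destruct p as [[[a b] [c e]] [g h]], q as [[[a' b'] [c' e']] [g' h']].
  unfold x1_, y1_, x2_, y2_, u_, v_, z1_, z2_, w_, Re, Im; simpl. intros; subst; reflexivity.
Qed.

Ltac aff_coords_tac :=
  apply pt_eq; unfold aff, Am, Am_inv, bm, bm_inv, x1_, y1_, x2_, y2_, u_, v_, z1_, z2_, w_, Re, Im,
    Cplus, Cmult, RtoC; simpl; field; auto.

Lemma Am_inv_l lam mu sig tau k kap p : lam <> 0 -> mu <> 0 -> sig <> 0 ->
  aff (Am_inv lam mu sig tau k) (bm_inv sig k kap) (aff (Am lam mu sig tau k) (bm kap) p) = p.
Proof. intros. aff_coords_tac. Qed.

Lemma Am_inv_r lam mu sig tau k kap q : lam <> 0 -> mu <> 0 -> sig <> 0 ->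
  aff (Am lam mu sig tau k) (bm kap) (aff (Am_inv lam mu sig tau k) (bm_inv sig k kap) q) = q.
Proof. intros. aff_coords_tac. Qed.

Lemma det3_Am lam mu sig tau k : det3 (Am lam mu sig tau k) = RtoC (lam * mu * sig).
Proof. apply C_eq; unfold det3, Am, Cminus, Cplus, Cmult, Copp, RtoC; simpl; field. Qed.

Lemma graph_model_equiv t1 t7 t8 m1 F d f S lam mu sig tau kap :
  integral_variety_12 (in_g t1 t7 t8 m1) F d -> profile_ode (coefA t1 t7 m1) t7 f ->
  lam <> 0 -> mu <> 0 -> sig <> 0 ->
  (forall p, 0 < 1 + coefA t1 t7 m1 * (x1_ p + (m1 - t7) / 2 * v_ p) ->
     (v_ p = x2_ p ^ 2 + y2_ p ^ 2 + f (x1_ p + (m1 - t7) / 2 * v_ p) <->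
      S (aff (Am lam mu sig tau (m1 - t7)) (bm kap) p))) ->
  affinely_equiv F d S.
Proof.
  intros HV Hf Hl Hm Hs H.
  destruct (integral_variety_graph t1 t7 t8 m1 F d f HV Hf) as [d' [Hd' G]].
  apply (affinely_equiv_of_box F d S (Am lam mu sig tau (m1 - t7)) (bm kap)
           (Am_inv lam mu sig tau (m1 - t7)) (bm_inv sig (m1 - t7) kap) d').
  - rewrite det3_Am. intros E. apply (f_equal fst) in E. simpl in E.
    apply (Rmult_integral_contrapositive_currified (lam * mu) sig); [|exact Hs|exact E].
    apply Rmult_integral_contrapositive_currified; assumption.
  - exact Hd'.
  - intros p. apply Am_inv_l; assumption.
  - intros q. apply Am_inv_r; assumption.
  - intros p Hp. destruct (G p Hp) as [HA Hiff]. rewrite Hiff. apply H, HA.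
Qed.

Ltac coords p := match goal with |- context [aff (Am ?l ?m ?s ?t ?k) (bm ?c) p] =>
  destruct (aff_Am_coords l m s t k c p) as (C1 & C2 & C3 & C4 & C5 & C6) end.

Lemma equiv_model1 t1 t7 t8 m1 F d : t7 = coefA t1 t7 m1 ->
  integral_variety_12 (in_g t1 t7 t8 m1) F d -> affinely_equiv F d model1.
Proof.
  intros HB HV.
  apply (graph_model_equiv t1 t7 t8 m1 F d (fun X => 2 * X ^ 2) model1 1 1 1 0 0 HV); try lra.
  - split; [ring|]. intros X HX. unfold profile_slope. auto_derive; [exact I|].
    rewrite <- HB in *. field. lra.
  - intros p HA. coords p. unfold model1. rewrite C1, C3, C4, C6. split; intros; nra.
Qed.

Lemma equiv_model2 t1 t7 t8 m1 F d : coefA t1 t7 m1 = 0 -> t7 <> 0 ->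
  integral_variety_12 (in_g t1 t7 t8 m1) F d -> affinely_equiv F d model2.
Proof.
  intros HA0 HB HV.
  apply (graph_model_equiv t1 t7 t8 m1 F d (fun X => (exp (2 * t7 * X) - 1 - 2 * t7 * X) / t7 ^ 2) model2
     (2 * t7) t7 (t7 ^ 2) (2 * t7) 1 HV); [| lra | exact HB | apply pow_nonzero, HB |].
  - split; [rewrite Rmult_0_r, exp_0; field; exact HB|].
    intros X HX. unfold profile_slope. auto_derive; [exact I|]. rewrite HA0. field. exact HB.
  - intros p HA. coords p. unfold model2. rewrite C1, C3, C4, C6.
    set (X := x1_ p + (m1 - t7) / 2 * v_ p).
    assert (Ht2 : t7 ^ 2 <> 0) by (apply pow_nonzero, HB).
    split; intros E.
    + rewrite E. field. exact HB.
    + apply (Rmult_eq_reg_l (t7 ^ 2)); [|exact Ht2].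
      replace (t7 ^ 2 * (x2_ p ^ 2 + y2_ p ^ 2 + (exp (2 * t7 * X) - 1 - 2 * t7 * X) / t7 ^ 2))
        with (t7 ^ 2 * (x2_ p ^ 2 + y2_ p ^ 2) + exp (2 * t7 * X) - 1 - 2 * t7 * X) by (field; exact HB).
      nra.
Qed.

Lemma equiv_model3 t1 t7 t8 m1 F d : coefA t1 t7 m1 <> 0 -> t7 = 0 ->
  integral_variety_12 (in_g t1 t7 t8 m1) F d -> affinely_equiv F d model3.
Proof.
  intros HA0 HB HV. set (A := coefA t1 t7 m1) in *.
  apply (graph_model_equiv t1 t7 t8 m1 F d (fun X => 4 / A ^ 2 * (A * X - ln (1 + A * X))) model3
     A (A / 2) (A ^ 2 / 4) (- A) 0 HV); try (intro E; apply HA0; nra).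
  - split; [rewrite Rmult_0_r, Rplus_0_r, ln_1; field; exact HA0|].
    intros X HX. unfold profile_slope. fold A in HX |- *. auto_derive; [lra|].
    rewrite HB. field. split; first [exact HA0 | intro; lra].
  - intros p HA. fold A in HA. coords p. unfold model3. rewrite C1, C3, C4, C6.
    set (X := x1_ p + (m1 - t7) / 2 * v_ p) in *.
    split; intros E.
    + split; [lra|]. rewrite E. field. exact HA0.
    + destruct E as [_ E]. apply (Rmult_eq_reg_l (A ^ 2 / 4)).
      2: apply Rmult_integral_contrapositive_currified; [apply pow_nonzero, HA0|lra].
      replace (A ^ 2 / 4 * (x2_ p ^ 2 + y2_ p ^ 2 + 4 / A ^ 2 * (A * X - ln (1 + A * X))))
        with ((A / 2 * x2_ p) ^ 2 + (A / 2 * y2_ p) ^ 2 + A * X - ln (1 + A * X)) by (field; exact HA0).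
      lra.
Qed.

Lemma equiv_model4 t1 t7 t8 m1 F d : coefA t1 t7 m1 <> 0 -> coefA t1 t7 m1 = 2 * t7 ->
  integral_variety_12 (in_g t1 t7 t8 m1) F d -> affinely_equiv F d model4.
Proof.
  intros HA0 HB HV. set (A := coefA t1 t7 m1) in *.
  apply (graph_model_equiv t1 t7 t8 m1 F d
     (fun X => 4 / A ^ 2 * ((1 + A * X) * ln (1 + A * X) - A * X)) model4
     A (A / 2) (A ^ 2 / 4) A 0 HV); try (intro E; apply HA0; nra).
  - split; [rewrite Rmult_0_r, Rplus_0_r, ln_1; field; exact HA0|].
    intros X HX. unfold profile_slope. fold A in HX |- *. auto_derive; [lra|].
    replace (2 * t7) with A by lra. field. split; first [exact HA0 | intro; lra].
  - intros p HA. fold A in HA. coords p. unfold model4. rewrite C1, C3, C4, C6.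
    set (X := x1_ p + (m1 - t7) / 2 * v_ p) in *.
    split; intros E.
    + split; [lra|]. rewrite E. field. exact HA0.
    + destruct E as [_ E]. apply (Rmult_eq_reg_l (A ^ 2 / 4)).
      2: apply Rmult_integral_contrapositive_currified; [apply pow_nonzero, HA0|lra].
      replace (A ^ 2 / 4 * (x2_ p ^ 2 + y2_ p ^ 2 + 4 / A ^ 2 * ((1 + A * X) * ln (1 + A * X) - A * X)))
        with ((A / 2 * x2_ p) ^ 2 + (A / 2 * y2_ p) ^ 2 + (1 + A * X) * ln (1 + A * X) - A * X)
        by (field; exact HA0).
      lra.
Qed.

(* The profile [Cc ((1 + A X)^al - 1) + a A X] solves the ODE; dividing by [|Cc|] normalises the
   leading coefficient to [+-1]. *)
Lemma equiv_model5 t1 t7 t8 m1 F d : coefA t1 t7 m1 <> 0 -> t7 <> 0 -> t7 <> coefA t1 t7 m1 ->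
  coefA t1 t7 m1 <> 2 * t7 ->
  integral_variety_12 (in_g t1 t7 t8 m1) F d ->
  exists s alpha : R, (s = 1 \/ s = -1) /\ alpha <> 0 /\ alpha <> 1 /\ alpha <> 2 /\
    affinely_equiv F d (model5 s alpha).
Proof.
  intros HA0 HB0 HBA HA2 HV. set (A := coefA t1 t7 m1) in *.
  set (al := 2 * t7 / A). set (a := 4 / (A * (A - 2 * t7))). set (Cc := - 2 / (t7 * (A - 2 * t7))).
  assert (HA2' : A - 2 * t7 <> 0) by lra.
  assert (HC : Cc <> 0).
  { unfold Cc, Rdiv. apply Rmult_integral_contrapositive_currified; [lra|].
    apply Rinv_neq_0_compat, Rmult_integral_contrapositive_currified; assumption. }
  assert (HaC : 0 < Rabs Cc) by (apply Rabs_pos_lt, HC).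
  exists (Cc / Rabs Cc), al.
  split; [unfold Rabs; destruct (Rcase_abs Cc); [right|left]; field; lra|].
  assert (Hal : al * A = 2 * t7) by (unfold al; field; exact HA0).
  split; [intro E; rewrite E in Hal; lra|].
  split; [intro E; rewrite E in Hal; lra|].
  split; [intro E; rewrite E in Hal; lra|].
  apply (graph_model_equiv t1 t7 t8 m1 F d (fun X => Cc * (Rpower (1 + A * X) al - 1) + a * A * X)
     (model5 (Cc / Rabs Cc) al) A (/ sqrt (Rabs Cc)) (/ Rabs Cc) (- a * A / Rabs Cc) (Cc / Rabs Cc) HV).
  - split; [unfold Rpower; rewrite Rmult_0_r, Rplus_0_r, ln_1, Rmult_0_r, exp_0; ring|].
    intros X HX. unfold profile_slope, Rpower. fold A in HX |- *. auto_derive; [lra|].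
    unfold Cc, a, al. field. repeat split; try assumption; lra.
  - exact HA0.
  - apply Rinv_neq_0_compat, Rgt_not_eq, sqrt_lt_R0, HaC.
  - apply Rinv_neq_0_compat. lra.
  - intros p HA. fold A in HA. coords p. unfold model5. rewrite C1, C3, C4, C6.
    set (X := x1_ p + (m1 - t7) / 2 * v_ p) in *.
    assert (Hs : (/ sqrt (Rabs Cc) * x2_ p) ^ 2 + (/ sqrt (Rabs Cc) * y2_ p) ^ 2
                 = / Rabs Cc * (x2_ p ^ 2 + y2_ p ^ 2)).
    { rewrite <- (sqrt_sqrt (Rabs Cc)) at 3 by lra. field. apply Rgt_not_eq, sqrt_lt_R0, HaC. }
    rewrite Hs. set (E := Rpower (1 + A * X) al).
    split; intros H.
    + split; [lra|]. rewrite H. field. lra.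
    + destruct H as [_ H]. apply (Rmult_eq_reg_l (/ Rabs Cc)); [|apply Rinv_neq_0_compat; lra].
      replace (/ Rabs Cc * v_ p) with (Cc / Rabs Cc * E + / Rabs Cc * (x2_ p ^ 2 + y2_ p ^ 2)
        + a * A / Rabs Cc * X - Cc / Rabs Cc) by lra.
      field. lra.
Qed.

Theorem theorem4p3 :
  forall (t1 t7 t8 m1 : R) (F : R -> R -> R -> R -> R -> R) (d : R),
    integral_variety_12 (in_g t1 t7 t8 m1) F d ->
    affinely_equiv F d model1 \/
    affinely_equiv F d model2 \/
    affinely_equiv F d model3 \/
    affinely_equiv F d model4 \/
    (exists s alpha : R, (s = 1 \/ s = -1) /\
       alpha <> 0 /\ alpha <> 1 /\ alpha <> 2 /\
       affinely_equiv F d (model5 s alpha)).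
Proof.
  intros t1 t7 t8 m1 F d HV.
  destruct (Req_dec t7 (coefA t1 t7 m1)) as [E1|E1].
  { left. exact (equiv_model1 t1 t7 t8 m1 F d E1 HV). }
  destruct (Req_dec (coefA t1 t7 m1) 0) as [E2|E2].
  { right; left. apply (equiv_model2 t1 t7 t8 m1 F d E2); [lra|exact HV]. }
  destruct (Req_dec t7 0) as [E3|E3].
  { right; right; left. exact (equiv_model3 t1 t7 t8 m1 F d E2 E3 HV). }
  destruct (Req_dec (coefA t1 t7 m1) (2 * t7)) as [E4|E4].
  { right; right; right; left. exact (equiv_model4 t1 t7 t8 m1 F d E2 E4 HV). }
  right; right; right; right. exact (equiv_model5 t1 t7 t8 m1 F d E2 E3 E1 E4 HV).
Qed.
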